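(* Let $f$ be a real-valued function on $[0,1]^2$ which is $1$-periodic in each variable, belongs to $C^2([0,1]^2)$, and is not identically zero. For an integer $N\ge 2$, define $g:\mathbb{Z}_N^2\to\mathbb{R}$ by $g(x_1,x_2)=f(x_1/N,x_2/N)$. Assume that $$N\|f\|_{L^2([0,1]^2)}^2\ge 8\|f\|_{C^2([0,1]^2)}^2.$$ Define $\widehat g(m)=\frac{1}{N}\sum_{x\in\mathbb{Z}_N^2}\chi(-x\cdot m)g(x)$ for $m\in\mathbb{Z}_N^2$, where $\chi(t)=e^{2\pi i t/N}$, and $FR(g)=\|\widehat g\|_1/\|\widehat g\|_2$. Then $$FR(g)\le 2\frac{\left|\int_{[0,1]^2} f(x)\,dx\right|}{\|f\|_{L^2([0,1]^2)}}+16\pi^2\frac{\|f\|_{C^2([0,1]^2)}}{\|f\|_{L^2([0,1]^2)}}\log N+\frac{8\pi^2}{\|f\|_{L^2([0,1]^2)}}\frac{\|f\|_{C^2([0,1]^2)}}{N}.$$ In particular, if $f\ge 0$ and $\mu=\int_{[0,1]^2}f(x)\,dx>0$, then $$FR(g)\le 2+16\pi^2\frac{\|f\|_{C^2([0,1]^2)}}{\mu}\log N+\frac{8\pi^2}{\mu}\frac{\|f\|_{C^2([0,1]^2)}}{N}.$$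
   Context: $\|f\|_{C^2([0,1]^2)}$ denotes the standard $C^2$ norm (supremum over $[0,1]^2$ of $|\partial^\alpha f|$ over all multi-indices $|\alpha|\le 2$); $\log$ is the natural logarithm; the $\ell^1$ and $\ell^2$ norms of $\widehat g$ are over $m\in\mathbb{Z}_N^2$. *)

From Stdlib Require Import Reals.
From Coquelicot Require Import Coquelicot.
Open Scope R_scope.

Definition D1 (f : R -> R -> R) (x y : R) : R := Derive (fun t => f t y) x.
Definition D2 (f : R -> R -> R) (x y : R) : R := Derive (fun t => f x t) y.

Definition cont2 (h : R -> R -> R) : Prop :=
  forall p : R * R, continuous (fun q : R * R => h (fst q) (snd q)) p.

(** f is C^2 on R^2 (hence, being 1-periodic, C^2 on the torus [0,1]^2):
    all partial derivatives of order <= 2 exist everywhere and are continuous. *)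
Definition C2 (f : R -> R -> R) : Prop :=
  (forall x y, ex_derive (fun t => f t y) x) /\
  (forall x y, ex_derive (fun t => f x t) y) /\
  (forall x y, ex_derive (fun t => D1 f t y) x) /\
  (forall x y, ex_derive (fun t => D1 f x t) y) /\
  (forall x y, ex_derive (fun t => D2 f t y) x) /\
  (forall x y, ex_derive (fun t => D2 f x t) y) /\
  cont2 f /\ cont2 (D1 f) /\ cont2 (D2 f) /\
  cont2 (D1 (D1 f)) /\ cont2 (D2 (D1 f)) /\
  cont2 (D1 (D2 f)) /\ cont2 (D2 (D2 f)).

Definition periodic1 (f : R -> R -> R) : Prop :=
  forall x y, f (x + 1) y = f x y /\ f x (y + 1) = f x y.

Definition C2norm (f : R -> R -> R) : R :=
  real (Lub_Rbar (fun r => exists x y, 0 <= x <= 1 /\ 0 <= y <= 1 /\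
    (r = Rabs (f x y) \/ r = Rabs (D1 f x y) \/ r = Rabs (D2 f x y) \/
     r = Rabs (D1 (D1 f) x y) \/ r = Rabs (D2 (D1 f) x y) \/
     r = Rabs (D1 (D2 f) x y) \/ r = Rabs (D2 (D2 f) x y)))).

Definition int2 (h : R -> R -> R) : R :=
  RInt (fun x => RInt (fun y => h x y) 0 1) 0 1.

Definition L2norm (f : R -> R -> R) : R := sqrt (int2 (fun x y => (f x y) ^ 2)).

Definition chi (N : nat) (t : R) : C :=
  (cos (2 * PI * t / INR N), sin (2 * PI * t / INR N)).

(** Sum over Z_N (representatives 0..N-1). *)
Definition sumZN {G : AbelianMonoid} (N : nat) (F : nat -> G) : G :=
  sum_n F (N - 1)%nat.

Definition gN (N : nat) (f : R -> R -> R) (x1 x2 : nat) : R :=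
  f (INR x1 / INR N) (INR x2 / INR N).

Definition ghat (N : nat) (f : R -> R -> R) (m1 m2 : nat) : C :=
  Cmult (RtoC (/ INR N))
    (sumZN N (fun x1 => sumZN N (fun x2 =>
       Cmult (chi N (- (INR x1 * INR m1 + INR x2 * INR m2)))
             (RtoC (gN N f x1 x2))))).

Definition ghat_l1 (N : nat) (f : R -> R -> R) : R :=
  sumZN N (fun m1 => sumZN N (fun m2 => Cmod (ghat N f m1 m2))).

Definition ghat_l2 (N : nat) (f : R -> R -> R) : R :=
  sqrt (sumZN N (fun m1 => sumZN N (fun m2 => (Cmod (ghat N f m1 m2)) ^ 2))).

Definition FR (N : nat) (f : R -> R -> R) : R := ghat_l1 N f / ghat_l2 N f.

From Stdlib Require Import Reals Lra Lia ClassicalEpsilon.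
From Coquelicot Require Import Coquelicot.
Open Scope R_scope.

(* Parseval turns [ghat_l2 ^ 2] into the sum of [g ^ 2] over Z_N^2, a Riemann sum
   for [N^2 L2norm f ^ 2]; the hypothesis [N L2norm^2 >= 8 C2norm^2] controls its
   error, so [ghat_l2 >= N L2norm f / 2].  For [ghat_l1]: [ghat 0] is [N] times a
   Riemann sum for the mean of [f], and for [m <> 0] summation by parts against
   the discrete Laplacian, whose values on [g] are [O(C2norm f / N^2)], gives
   [(4 - 2 cos (2 pi m1 / N) - 2 cos (2 pi m2 / N)) |ghat m| <= 8 C2norm f / N].
   As [2 - 2 cos (2 pi m / N) >= pi^2 k^2 / N^2] with [k = min m (N - m)], the
   nonzero frequencies contribute [O(C2norm f N / pi^2)] times the lattice sum
   of [1 / (k1^2 + k2^2)], which is [O(log N)].  The second bound follows from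
   [mu <= L2norm f] (Cauchy-Schwarz). *)

(** * Finite sums of reals *)

(* Equations between Coquelicot sums live in [AbelianMonoid.sort _]; this
   exposes them as equations in [R] for [ring] and [field]. *)
Ltac R_eq := match goal with |- @eq _ ?a ?b => change (@eq R a b) end.

Lemma sum_n_RSn (a : nat -> R) n : sum_n a (S n) = sum_n a n + a (S n).
Proof. now rewrite sum_Sn. Qed.

Lemma sum_n_Rext (a b : nat -> R) n :
  (forall k, (k <= n)%nat -> a k = b k) -> sum_n a n = sum_n b n.
Proof. apply sum_n_ext_loc. Qed.

Lemma sum_n_Rle (a b : nat -> R) n :
  (forall k, (k <= n)%nat -> a k <= b k) -> sum_n a n <= sum_n b n.
Proof.
  intros H; induction n as [|n IH].
  - rewrite !sum_O; auto.
  - rewrite !sum_n_RSn; apply Rplus_le_compat; auto.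
Qed.

Lemma sum_n_Rplus (a b : nat -> R) n :
  sum_n (fun k => a k + b k) n = sum_n a n + sum_n b n.
Proof. apply (sum_n_plus a b n). Qed.

Lemma sum_n_Rmult_l (c : R) (a : nat -> R) n : sum_n (fun k => c * a k) n = c * sum_n a n.
Proof. apply (sum_n_mult_l c a n). Qed.

Lemma sum_n_Rmult_r (c : R) (a : nat -> R) n : sum_n (fun k => a k * c) n = sum_n a n * c.
Proof. apply (sum_n_mult_r c a n). Qed.

Lemma sum_n_Rminus (a b : nat -> R) n :
  sum_n (fun k => a k - b k) n = sum_n a n - sum_n b n.
Proof.
  rewrite (sum_n_Rext _ (fun k => a k + (-1) * b k)) by (intros; ring).
  rewrite sum_n_Rplus, sum_n_Rmult_l; R_eq; ring.
Qed.

Lemma sum_n_Rabs (a : nat -> R) n : Rabs (sum_n a n) <= sum_n (fun k => Rabs (a k)) n.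
Proof.
  induction n as [|n IH].
  - rewrite !sum_O; lra.
  - rewrite !sum_n_RSn; eapply Rle_trans; [apply Rabs_triang | lra].
Qed.

Lemma sum_n_nonneg (a : nat -> R) n : (forall k, (k <= n)%nat -> 0 <= a k) -> 0 <= sum_n a n.
Proof.
  intros H; rewrite <- (Rmult_0_r (INR (S n))), <- sum_n_const; apply sum_n_Rle; auto.
Qed.

Lemma sum_n_Rabs_le (a : nat -> R) (c : R) n :
  (forall k, (k <= n)%nat -> Rabs (a k) <= c) -> Rabs (sum_n a n) <= INR (S n) * c.
Proof.
  intros H; eapply Rle_trans; [apply sum_n_Rabs|].
  rewrite <- sum_n_const; apply sum_n_Rle; auto.
Qed.

Lemma sum_n_term_le (a : nat -> R) n i :
  (forall k, (k <= n)%nat -> 0 <= a k) -> (i <= n)%nat -> a i <= sum_n a n.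
Proof.
  intros H Hi; induction n as [|n IH].
  - replace i with 0%nat by lia; rewrite sum_O; lra.
  - rewrite sum_n_RSn; destruct (Nat.eq_dec i (S n)) as [->|Hne].
    + assert (0 <= sum_n a n) by (apply sum_n_nonneg; auto). lra.
    + assert (a i <= sum_n a n) by (apply IH; auto; lia).
      assert (0 <= a (S n)) by auto. lra.
Qed.

Lemma sum_n_Sl (a : nat -> R) n : sum_n a (S n) = a 0%nat + sum_n (fun k => a (S k)) n.
Proof.
  induction n as [|n IH].
  - rewrite sum_n_RSn, !sum_O; R_eq; ring.
  - rewrite sum_n_RSn, IH, (sum_n_RSn (fun k => a (S k))); R_eq; ring.
Qed.

Lemma sum_n_rev (a : nat -> R) n : sum_n (fun k => a (n - k)%nat) n = sum_n a n.
Proof.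
  induction n as [|n IH].
  - now rewrite !sum_O.
  - rewrite sum_n_Sl, Nat.sub_0_r, sum_n_RSn.
    rewrite (sum_n_Rext (fun k => a (S n - S k)%nat) (fun k => a (n - k)%nat)) by reflexivity.
    rewrite IH; R_eq; ring.
Qed.

Lemma sum_n_delta (c : nat -> R) i n :
  (i <= n)%nat -> sum_n (fun k => if Nat.eqb i k then c k else 0) n = c i.
Proof.
  intros H; induction n as [|n IH].
  - replace i with 0%nat by lia; now rewrite sum_O.
  - rewrite sum_n_RSn; destruct (Nat.eq_dec i (S n)) as [->|Hne].
    + rewrite Nat.eqb_refl, (sum_n_Rext _ (fun _ => 0)), sum_n_const; [lra|].
      intros k Hk; destruct (Nat.eqb_spec (S n) k); [lia | reflexivity].
    + rewrite IH by lia; destruct (Nat.eqb_spec i (S n)); [lia | lra].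
Qed.

Lemma sum_n_sqr (a : nat -> R) n :
  (sum_n a n) ^ 2 = sum_n (fun x => sum_n (fun y => a x * a y) n) n.
Proof.
  replace ((sum_n a n) ^ 2) with (sum_n a n * sum_n a n) by ring.
  rewrite <- sum_n_Rmult_r.
  apply sum_n_Rext; intros; now rewrite sum_n_Rmult_l.
Qed.

(* Cauchy-Schwarz, from the nonnegativity of the sum of [(a k - mean)^2]. *)
Lemma sum_n_sqr_le (a : nat -> R) n :
  (sum_n a n) ^ 2 <= INR (S n) * sum_n (fun k => a k ^ 2) n.
Proof.
  set (m := sum_n a n / INR (S n)).
  assert (HS : 0 < INR (S n)) by (apply lt_0_INR; lia).
  assert (H0 : 0 <= sum_n (fun k => (a k - m) ^ 2) n)
    by (apply sum_n_nonneg; intros; apply pow2_ge_0).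
  rewrite (sum_n_Rext _ (fun k => a k ^ 2 - (2 * m) * a k + m ^ 2)) in H0 by (intros; ring).
  rewrite sum_n_Rplus, sum_n_Rminus, sum_n_Rmult_l, sum_n_const in H0.
  unfold m in H0.
  apply Rmult_le_compat_l with (r := INR (S n)) in H0; [|lra].
  replace (INR (S n) * (sum_n (fun k => a k ^ 2) n - 2 * (sum_n a n / INR (S n)) * sum_n a n
             + INR (S n) * (sum_n a n / INR (S n)) ^ 2))
    with (INR (S n) * sum_n (fun k => a k ^ 2) n - (sum_n a n) ^ 2) in H0 by (field; lra).
  lra.
Qed.

(** * Derivative bounds and Riemann sums *)

Definition Lipschitz (phi : R -> R) (K : R) : Prop :=
  forall s t, Rabs (phi s - phi t) <= K * Rabs (s - t).

Lemma Lipschitz_of_derive_bound (phi dphi : R -> R) (K : R) :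
  (forall x, is_derive phi x (dphi x)) -> (forall x, Rabs (dphi x) <= K) -> Lipschitz phi K.
Proof. intros Hd Hb s t; apply (bounded_variation phi dphi); auto. Qed.

(* The even part [psi s = phi (t + s) + phi (t - s)] has derivative
   [d1 (t + s) - d1 (t - s)], which is at most [2 C |s|] by the mean value theorem. *)
Lemma second_difference_bound (phi d1 d2 : R -> R) (C : R) :
  (forall x, is_derive phi x (d1 x)) ->
  (forall x, is_derive d1 x (d2 x)) ->
  (forall x, Rabs (d2 x) <= C) ->
  forall t h, Rabs (phi (t + h) + phi (t - h) - 2 * phi t) <= 2 * C * h ^ 2.
Proof.
  intros Hphi Hd1 HC t h.
  assert (Hlip := Lipschitz_of_derive_bound d1 d2 C Hd1 HC).
  assert (Hpsi : Rabs ((phi (t + h) + phi (t - h)) - (phi (t + 0) + phi (t - 0)))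
                 <= (2 * C * Rabs h) * Rabs (h - 0)).
  { apply (bounded_variation (fun s => phi (t + s) + phi (t - s))
                             (fun s => d1 (t + s) - d1 (t - s))).
    intros s Hs; split.
    - apply (is_derive_plus (fun s => phi (t + s)) (fun s => phi (t - s))).
      + replace (d1 (t + s)) with (1 * d1 (t + s)) by ring.
        apply (is_derive_comp phi (fun s => t + s)); [apply Hphi | auto_derive; auto; ring].
      + replace (- d1 (t - s)) with ((-1) * d1 (t - s)) by ring.
        apply (is_derive_comp phi (fun s => t - s)); [apply Hphi | auto_derive; auto; ring].
    - specialize (Hlip (t + s) (t - s)).
      replace (t + s - (t - s)) with (2 * s) in Hlip by ring.
      rewrite Rabs_mult, (Rabs_right 2) in Hlip by lra.
      rewrite !Rminus_0_r in Hs.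
      assert (0 <= C) by (specialize (HC 0); pose proof (Rabs_pos (d2 0)); lra).
      assert (C * Rabs s <= C * Rabs h) by (apply Rmult_le_compat_l; auto).
      lra. }
  rewrite !Rplus_0_r, !Rminus_0_r in Hpsi.
  replace (phi (t + h) + phi (t - h) - 2 * phi t)
    with (phi (t + h) + phi (t - h) - (phi t + phi t)) by ring.
  eapply Rle_trans; [exact Hpsi|]; rewrite <- (pow2_abs h); right; ring.
Qed.

Lemma Lipschitz_continuous phi K : 0 <= K -> Lipschitz phi K -> forall z, continuous phi z.
Proof.
  intros HK H z; apply continuity_pt_filterlim.
  intros eps Heps; exists (eps / (K + 1)); split; [apply Rdiv_lt_0_compat; lra|].
  intros x [_ Hx]; simpl in *; unfold R_dist in *.
  assert (0 < eps / (K + 1)) by (apply Rdiv_lt_0_compat; lra).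
  eapply Rle_lt_trans; [apply H|].
  apply Rlt_le_trans with ((K + 1) * (eps / (K + 1))); [nra | right; field; lra].
Qed.

Lemma Lipschitz_ex_RInt phi K : 0 <= K -> Lipschitz phi K -> forall a b, ex_RInt phi a b.
Proof.
  intros; apply (@ex_RInt_continuous R_CompleteNormedModule); intros.
  eapply Lipschitz_continuous; eauto.
Qed.

Lemma RInt_left_endpoint_error phi K a b : 0 <= K -> Lipschitz phi K -> a <= b ->
  Rabs (RInt phi a b - (b - a) * phi a) <= K * (b - a) ^ 2.
Proof.
  intros HK H Hab.
  assert (Hint : ex_RInt (fun x => phi x - phi a) a b).
  { apply (ex_RInt_minus phi (fun _ => phi a));
      [eapply Lipschitz_ex_RInt; eauto | apply ex_RInt_const]. }
  replace (RInt phi a b - (b - a) * phi a) with (RInt (fun x => phi x - phi a) a b).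
  2:{ rewrite (RInt_minus phi (fun _ => phi a)), RInt_const; [reflexivity| |apply ex_RInt_const].
      eapply Lipschitz_ex_RInt; eauto. }
  replace (K * (b - a) ^ 2) with ((b - a) * (K * (b - a))) by ring.
  apply abs_RInt_le_const; auto.
  intros t Ht; eapply Rle_trans; [apply H|].
  apply Rmult_le_compat_l; [lra|]; rewrite Rabs_right; lra.
Qed.

Lemma Riemann_partial_sum_error phi K n k : 0 <= K -> Lipschitz phi K -> (0 < n)%nat ->
  Rabs (RInt phi 0 (INR (S k) / INR n) - / INR n * sum_n (fun i => phi (INR i / INR n)) k)
  <= INR (S k) * (K / INR n ^ 2).
Proof.
  intros HK H Hn; assert (Hn' : 0 < INR n) by (apply lt_0_INR; lia).
  induction k as [|k IH].
  - rewrite sum_O.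
    pose proof (RInt_left_endpoint_error phi K 0 (INR 1 / INR n) HK H) as Hcell.
    replace (INR 0 / INR n) with 0 by (simpl; field; lra).
    replace (/ INR n * phi 0) with ((INR 1 / INR n - 0) * phi 0) by (simpl; field; lra).
    eapply Rle_trans; [apply Hcell; simpl; apply Rlt_le, Rdiv_lt_0_compat; lra|].
    right; simpl; field; lra.
  - set (a := INR (S k) / INR n); set (b := INR (S (S k)) / INR n).
    assert (Hab : b - a = / INR n) by (unfold a, b; rewrite !S_INR; field; lra).
    pose proof (RInt_left_endpoint_error phi K a b HK H) as Hcell; rewrite Hab in Hcell.
    rewrite sum_n_RSn, <- (RInt_Chasles phi 0 a b) by (eapply Lipschitz_ex_RInt; eauto).
    change plus with Rplus.
    match goal with |- Rabs ?e <= _ => replace e with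
      ((RInt phi 0 a - / INR n * sum_n (fun i => phi (INR i / INR n)) k)
       + (RInt phi a b - / INR n * phi a)) by (unfold a; ring) end.
    eapply Rle_trans; [apply Rabs_triang|].
    replace (INR (S (S k)) * (K / INR n ^ 2)) with (INR (S k) * (K / INR n ^ 2) + K * (/ INR n) ^ 2)
      by (rewrite (S_INR (S k)); field; lra).
    pose proof (Rinv_0_lt_compat _ Hn'); apply Rplus_le_compat; [apply IH | apply Hcell; lra].
Qed.

Lemma Riemann_sum_error phi K n : 0 <= K -> Lipschitz phi K -> (0 < n)%nat ->
  Rabs (RInt phi 0 1 - / INR n * sum_n (fun i => phi (INR i / INR n)) (n - 1)) <= K / INR n.
Proof.
  intros HK H Hn; assert (Hn' : 0 < INR n) by (apply lt_0_INR; lia).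
  pose proof (Riemann_partial_sum_error phi K n (n - 1) HK H Hn) as Hk.
  replace (S (n - 1)) with n in Hk by lia.
  replace (INR n / INR n) with 1 in Hk by (field; lra).
  eapply Rle_trans; [apply Hk | right; field; lra].
Qed.

Definition torus_sum (N : nat) (Phi : R -> R -> R) : R :=
  sum_n (fun x1 => sum_n (fun x2 => Phi (INR x1) (INR x2)) (N - 1)) (N - 1).

Definition rescale (N : nat) (h : R -> R -> R) (a b : R) : R := h (a / INR N) (b / INR N).

Lemma int2_Riemann_sum_error h K1 K2 n : 0 <= K1 -> 0 <= K2 ->
  (forall y, Lipschitz (fun x => h x y) K1) -> (forall x, Lipschitz (fun y => h x y) K2) ->
  (0 < n)%nat ->
  Rabs (int2 h - torus_sum n (rescale n h) / INR n ^ 2) <= (K1 + K2) / INR n.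
Proof.
  intros HK1 HK2 H1 H2 Hn.
  assert (Hn' : 0 < INR n) by (apply lt_0_INR; lia).
  set (F := (fun x => RInt (fun y => h x y) 0 1) : R -> R).
  assert (HF : Lipschitz F K1).
  { intros s t; unfold F.
    rewrite <- (RInt_minus (fun y => h s y) (fun y => h t y))
      by (eapply Lipschitz_ex_RInt; eauto).
    replace (K1 * Rabs (s - t)) with ((1 - 0) * (K1 * Rabs (s - t))) by ring.
    apply abs_RInt_le_const; [lra| |intros y _; apply (H1 y)].
    apply (ex_RInt_minus (fun y => h s y) (fun y => h t y)); eapply Lipschitz_ex_RInt; eauto. }
  set (row := fun i => / INR n * sum_n (fun j => h (INR i / INR n) (INR j / INR n)) (n - 1)).
  assert (Hrows : Rabs (/ INR n * sum_n (fun i => F (INR i / INR n)) (n - 1)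
                        - / INR n * sum_n row (n - 1)) <= K2 / INR n).
  { rewrite <- Rmult_minus_distr_l, <- sum_n_Rminus, Rabs_mult.
    rewrite Rabs_right by (apply Rle_ge, Rlt_le, Rinv_0_lt_compat; lra).
    replace (K2 / INR n) with (/ INR n * (INR (S (n - 1)) * (K2 / INR n)))
      by (replace (S (n - 1)) with n by lia; field; lra).
    apply Rmult_le_compat_l; [apply Rlt_le, Rinv_0_lt_compat; lra|].
    apply sum_n_Rabs_le; intros i _.
    apply (Riemann_sum_error (fun y => h (INR i / INR n) y) K2 n HK2 (H2 _) Hn). }
  pose proof (Riemann_sum_error F K1 n HK1 HF Hn) as Hcols.
  replace (torus_sum n (rescale n h) / INR n ^ 2) with (/ INR n * sum_n row (n - 1))
    by (unfold row; rewrite sum_n_Rmult_l; unfold torus_sum, rescale; field; lra).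
  replace ((K1 + K2) / INR n) with (K1 / INR n + K2 / INR n) by (field; lra).
  unfold int2; fold F.
  set (A := / INR n * sum_n (fun i => F (INR i / INR n)) (n - 1)) in *.
  replace (RInt F 0 1 - / INR n * sum_n row (n - 1))
    with ((RInt F 0 1 - A) + (A - / INR n * sum_n row (n - 1))) by ring.
  eapply Rle_trans; [apply Rabs_triang | lra].
Qed.

(** * The C^2 norm *)

Lemma cont2_eps_delta h : cont2 h -> forall u v eps, 0 < eps -> exists del, 0 < del /\
  forall x y, Rabs (x - u) < del -> Rabs (y - v) < del -> Rabs (h x y - h u v) < eps.
Proof.
  intros H u v eps He.
  assert (L : locally (u, v) (fun q : R * R => ball (h u v) eps (h (fst q) (snd q)))).
  { apply (H (u, v)); exists (mkposreal eps He); auto. }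
  destruct L as [del Hd]; exists del; split; [apply cond_pos|].
  intros x y Hx Hy; apply (Hd (x, y)); split; auto.
Qed.

Lemma grid_point_near K x : (0 < K)%nat -> 0 <= x <= 1 ->
  exists i, (i <= K)%nat /\ Rabs (INR i / INR K - x) <= / INR K.
Proof.
  intros HK Hx; assert (HK' : 0 < INR K) by (apply lt_0_INR; lia).
  destruct (nfloor_ex (x * INR K)) as [i Hi]; [nra|].
  exists i; split; [apply INR_le; nra|].
  replace (INR i / INR K - x) with ((INR i - x * INR K) * / INR K) by (field; lra).
  rewrite Rabs_mult, (Rabs_right (/ INR K)) by (apply Rle_ge, Rlt_le, Rinv_0_lt_compat; lra).
  rewrite <- (Rmult_1_l (/ INR K)) at 2.
  apply Rmult_le_compat_r; [apply Rlt_le, Rinv_0_lt_compat; lra | apply Rabs_le; lra].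
Qed.

(* By [compactness_value_2d], every point of the square and some grid point of mesh
   [< d] lie in a common neighbourhood on which [h] varies by less than [1]; so
   [|h|] is bounded by the sum of its grid values plus [2]. *)
Lemma cont2_bounded h : cont2 h ->
  exists M, forall x y, 0 <= x <= 1 -> 0 <= y <= 1 -> Rabs (h x y) <= M.
Proof.
  intros H.
  assert (D : forall u v, {d : posreal | forall x y, Rabs (x - u) < 2 * d -> Rabs (y - v) < 2 * d ->
                                         Rabs (h x y - h u v) < 1}).
  { intros u v; apply constructive_indefinite_description.
    destruct (cont2_eps_delta h H u v 1 Rlt_0_1) as [del [Hd Hdel]].
    assert (Hd2 : 0 < del / 2) by lra.
    exists (mkposreal _ Hd2); simpl; intros x y Hx Hy; apply Hdel; lra. }
  set (delta := fun u v => proj1_sig (D u v)).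
  destruct (compactness_value_2d 0 1 0 1 delta) as [d Hd].
  destruct (archimed_cor1 d (cond_pos d)) as [K [HK HK0]].
  set (grid := fun i j => Rabs (h (INR i / INR K) (INR j / INR K))).
  exists (sum_n (fun i => sum_n (fun j => grid i j) K) K + 2).
  intros x y Hx Hy.
  apply Rnot_lt_le; intro Hc; apply (Hd x y Hx Hy); intros (u & v & Hu & Hv & Hxu & Hyv & Hdu).
  destruct (grid_point_near K x) as (i & HiK & Hix); [lia | auto|].
  destruct (grid_point_near K y) as (j & HjK & Hjy); [lia | auto|].
  pose proof (proj2_sig (D u v)) as Huv; fold (delta u v) in Huv.
  pose proof (cond_pos (delta u v)).
  assert (E1 : Rabs (h x y - h u v) < 1) by (apply Huv; lra).
  assert (E2 : Rabs (h (INR i / INR K) (INR j / INR K) - h u v) < 1).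
  { apply Huv.
    - replace (INR i / INR K - u) with ((INR i / INR K - x) + (x - u)) by ring.
      eapply Rle_lt_trans; [apply Rabs_triang | lra].
    - replace (INR j / INR K - v) with ((INR j / INR K - y) + (y - v)) by ring.
      eapply Rle_lt_trans; [apply Rabs_triang | lra]. }
  assert (E3 : grid i j <= sum_n (fun i => sum_n (fun j => grid i j) K) K).
  { eapply Rle_trans; [|apply (sum_n_term_le (fun i => sum_n (fun j => grid i j) K) K i); auto].
    - apply (sum_n_term_le (fun j => grid i j)); auto; intros; apply Rabs_pos.
    - intros; apply sum_n_nonneg; intros; apply Rabs_pos. }
  pose proof (Rabs_triang_inv (h x y) (h u v)).
  pose proof (Rabs_triang_inv (h u v) (h (INR i / INR K) (INR j / INR K))).
  rewrite Rabs_minus_sym in E2.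
  change (grid i j) with (Rabs (h (INR i / INR K) (INR j / INR K))) in E3; lra.
Qed.

Lemma periodic1_D1 h : periodic1 h -> periodic1 (D1 h).
Proof.
  intros H x y; unfold D1; split.
  - unfold Derive; f_equal; apply Lim_ext; intros k.
    replace (x + 1 + k) with ((x + k) + 1) by ring.
    now rewrite (proj1 (H (x + k) y)), (proj1 (H x y)).
  - apply Derive_ext; intros t; apply H.
Qed.

Lemma periodic1_D2 h : periodic1 h -> periodic1 (D2 h).
Proof.
  intros H x y; unfold D2; split.
  - apply Derive_ext; intros t; apply H.
  - unfold Derive; f_equal; apply Lim_ext; intros k.
    replace (y + 1 + k) with ((y + k) + 1) by ring.
    now rewrite (proj2 (H x (y + k))), (proj2 (H x y)).
Qed.

Lemma periodic1_IZR h : periodic1 h ->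
  forall z x y, h (x + IZR z) y = h x y /\ h x (y + IZR z) = h x y.
Proof.
  intros H z; induction z as [|z IH|z IH] using Z.peano_ind; intros x y.
  - now rewrite !Rplus_0_r.
  - rewrite succ_IZR.
    replace (x + (IZR z + 1)) with ((x + IZR z) + 1) by ring.
    replace (y + (IZR z + 1)) with ((y + IZR z) + 1) by ring.
    rewrite (proj1 (H _ y)), (proj2 (H x _)); apply IH.
  - rewrite <- Z.sub_1_r, minus_IZR; split.
    + rewrite <- (proj1 (H (x + (IZR z - 1)) y)).
      replace (x + (IZR z - 1) + 1) with (x + IZR z) by ring; apply IH.
    + rewrite <- (proj2 (H x (y + (IZR z - 1)))).
      replace (y + (IZR z - 1) + 1) with (y + IZR z) by ring; apply IH.
Qed.

Lemma periodic1_bound h M : periodic1 h ->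
  (forall x y, 0 <= x <= 1 -> 0 <= y <= 1 -> Rabs (h x y) <= M) -> forall x y, Rabs (h x y) <= M.
Proof.
  intros H HM x y.
  replace (h x y) with (h (frac_part x) (frac_part y)).
  - pose proof (base_fp x); pose proof (base_fp y); apply HM; lra.
  - unfold frac_part.
    set (a := x - IZR (Int_part x)); set (b := y - IZR (Int_part y)).
    rewrite <- (proj1 (periodic1_IZR h H (Int_part x) a b)).
    rewrite <- (proj2 (periodic1_IZR h H (Int_part y) (a + IZR (Int_part x)) b)).
    unfold a, b; f_equal; ring.
Qed.

Definition C2_values (f : R -> R -> R) (r : R) : Prop :=
  exists x y, 0 <= x <= 1 /\ 0 <= y <= 1 /\
    (r = Rabs (f x y) \/ r = Rabs (D1 f x y) \/ r = Rabs (D2 f x y) \/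
     r = Rabs (D1 (D1 f) x y) \/ r = Rabs (D2 (D1 f) x y) \/
     r = Rabs (D1 (D2 f) x y) \/ r = Rabs (D2 (D2 f) x y)).

Lemma C2_values_bounded f : C2 f -> exists M, forall r, C2_values f r -> r <= M.
Proof.
  intros (_ & _ & _ & _ & _ & _ & c0 & c1 & c2 & c11 & c21 & c12 & c22).
  destruct (cont2_bounded _ c0) as [M0 H0], (cont2_bounded _ c1) as [M1 H1],
    (cont2_bounded _ c2) as [M2 H2], (cont2_bounded _ c11) as [M3 H3],
    (cont2_bounded _ c21) as [M4 H4], (cont2_bounded _ c12) as [M5 H5],
    (cont2_bounded _ c22) as [M6 H6].
  exists (Rabs M0 + Rabs M1 + Rabs M2 + Rabs M3 + Rabs M4 + Rabs M5 + Rabs M6).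
  intros r (x & y & Hx & Hy & Hr).
  specialize (H0 x y Hx Hy); specialize (H1 x y Hx Hy); specialize (H2 x y Hx Hy);
    specialize (H3 x y Hx Hy); specialize (H4 x y Hx Hy); specialize (H5 x y Hx Hy);
    specialize (H6 x y Hx Hy).
  pose proof (Rle_abs M0); pose proof (Rle_abs M1); pose proof (Rle_abs M2);
    pose proof (Rle_abs M3); pose proof (Rle_abs M4); pose proof (Rle_abs M5);
    pose proof (Rle_abs M6).
  pose proof (Rabs_pos M0); pose proof (Rabs_pos M1); pose proof (Rabs_pos M2);
    pose proof (Rabs_pos M3); pose proof (Rabs_pos M4); pose proof (Rabs_pos M5);
    pose proof (Rabs_pos M6).
  destruct Hr as [->|[->|[->|[->|[->|[->| ->]]]]]]; lra.
Qed.

Lemma le_C2norm f r : C2 f -> C2_values f r -> r <= C2norm f.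
Proof.
  intros Hc Hr; destruct (C2_values_bounded f Hc) as [M HM].
  change (C2norm f) with (real (Lub_Rbar (C2_values f))).
  destruct (Lub_Rbar_correct (C2_values f)) as [Hub Hlub].
  destruct (Lub_Rbar (C2_values f)) as [l| |] eqn:E.
  - apply (Hub r Hr).
  - specialize (Hlub (Finite M) (fun r Hr => HM r Hr)); contradiction.
  - specialize (Hub r Hr); contradiction.
Qed.

Lemma C2norm_nonneg f : C2 f -> 0 <= C2norm f.
Proof.
  intros Hc; eapply Rle_trans; [apply (Rabs_pos (f 0 0))|].
  apply le_C2norm; auto; exists 0, 0; repeat split; auto; lra.
Qed.

(* Values on the unit square are in the supremum, and periodicity carries the
   bounds to the whole plane. *)
Lemma C2norm_bounds f : periodic1 f -> C2 f -> forall x y,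
  Rabs (f x y) <= C2norm f /\ Rabs (D1 f x y) <= C2norm f /\ Rabs (D2 f x y) <= C2norm f /\
  Rabs (D1 (D1 f) x y) <= C2norm f /\ Rabs (D2 (D2 f) x y) <= C2norm f.
Proof.
  intros P Hc.
  assert (B : forall h, periodic1 h ->
                (forall x y, 0 <= x <= 1 -> 0 <= y <= 1 -> C2_values f (Rabs (h x y))) ->
                forall x y, Rabs (h x y) <= C2norm f).
  { intros h Ph Hh; apply periodic1_bound; auto; intros; apply le_C2norm; auto. }
  intros x y; repeat split; apply B; auto using periodic1_D1, periodic1_D2;
    intros u v Hu Hv; exists u, v; do 2 (split; auto); tauto.
Qed.

Lemma C2_is_derive f : C2 f ->
  (forall x y, is_derive (fun t => f t y) x (D1 f x y)) /\
  (forall x y, is_derive (fun t => D1 f t y) x (D1 (D1 f) x y)) /\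
  (forall x y, is_derive (fun t => f x t) y (D2 f x y)) /\
  (forall x y, is_derive (fun t => D2 f x t) y (D2 (D2 f) x y)).
Proof.
  intros (e1 & e2 & e11 & _ & _ & e22 & _).
  split; [|split; [|split]]; intros; apply Derive_correct; auto.
Qed.

Lemma C2_Lipschitz_l f : periodic1 f -> C2 f -> forall y, Lipschitz (fun x => f x y) (C2norm f).
Proof.
  intros P Hc y; apply (Lipschitz_of_derive_bound _ (fun x => D1 f x y)).
  - intros; apply (C2_is_derive f Hc).
  - intros; apply (C2norm_bounds f P Hc).
Qed.

Lemma C2_Lipschitz_r f : periodic1 f -> C2 f -> forall x, Lipschitz (fun y => f x y) (C2norm f).
Proof.
  intros P Hc x; apply (Lipschitz_of_derive_bound _ (fun y => D2 f x y)).
  - intros; apply (C2_is_derive f Hc).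
  - intros; apply (C2norm_bounds f P Hc).
Qed.

(** * Discrete Fourier analysis on Z_N *)

Lemma sin_add_2PI_diff w x y : sin (w + 2 * PI * (INR y - INR x)) = sin w.
Proof.
  replace (w + 2 * PI * (INR y - INR x)) with ((w - 2 * PI * INR x) + 2 * INR y * PI) by ring.
  rewrite sin_period, <- (sin_period (w - 2 * PI * INR x) x); f_equal; ring.
Qed.

Lemma cos_add_2PI_diff w x y : cos (w + 2 * PI * (INR y - INR x)) = cos w.
Proof.
  replace (w + 2 * PI * (INR y - INR x)) with ((w - 2 * PI * INR x) + 2 * INR y * PI) by ring.
  rewrite cos_period, <- (cos_period (w - 2 * PI * INR x) x); f_equal; ring.
Qed.

Lemma sum_n_cos_mul a n :
  2 * sin (a / 2) * sum_n (fun m => cos (a * INR m)) n = sin (a * (INR n + 1 / 2)) + sin (a / 2).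
Proof.
  induction n as [|n IH].
  - rewrite sum_O; simpl; rewrite Rmult_0_r, cos_0.
    replace (a * (0 + 1 / 2)) with (a / 2) by field; ring.
  - rewrite sum_n_RSn, Rmult_plus_distr_l, IH.
    set (w := a * INR (S n)).
    replace (a * (INR n + 1 / 2)) with (w - a / 2) by (unfold w; rewrite S_INR; field).
    replace (a * (INR (S n) + 1 / 2)) with (w + a / 2) by (unfold w; field).
    rewrite sin_plus, sin_minus; ring.
Qed.

Lemma sum_n_sin_mul a n :
  2 * sin (a / 2) * sum_n (fun m => sin (a * INR m)) n = cos (a / 2) - cos (a * (INR n + 1 / 2)).
Proof.
  induction n as [|n IH].
  - rewrite sum_O; simpl; rewrite Rmult_0_r, sin_0.
    replace (a * (0 + 1 / 2)) with (a / 2) by field; ring.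
  - rewrite sum_n_RSn, Rmult_plus_distr_l, IH.
    set (w := a * INR (S n)).
    replace (a * (INR n + 1 / 2)) with (w - a / 2) by (unfold w; rewrite S_INR; field).
    replace (a * (INR (S n) + 1 / 2)) with (w + a / 2) by (unfold w; field).
    rewrite cos_plus, cos_minus; ring.
Qed.

Lemma sin_PI_frac_neq_0 N x y : (x < N)%nat -> (y < N)%nat -> x <> y ->
  sin (2 * PI * (INR y - INR x) / INR N / 2) <> 0.
Proof.
  intros Hx Hy Hxy.
  assert (HN : 0 < INR N) by (apply lt_0_INR; lia).
  apply lt_INR in Hx, Hy; pose proof (pos_INR x); pose proof (pos_INR y); pose proof PI_RGT_0.
  assert (Hpos : forall d, 0 < d < INR N -> 0 < sin (PI * (d / INR N))).
  { intros d Hd; apply sin_gt_0.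
    - apply Rmult_lt_0_compat; [lra | apply Rdiv_lt_0_compat; lra].
    - rewrite <- (Rmult_1_r PI) at 2; apply Rmult_lt_compat_l; [lra|].
      apply Rmult_lt_reg_r with (INR N); [lra|].
      unfold Rdiv; rewrite Rmult_assoc, Rinv_l; lra. }
  replace (2 * PI * (INR y - INR x) / INR N / 2) with (PI * ((INR y - INR x) / INR N))
    by (field; lra).
  destruct (Nat.lt_ge_cases x y) as [L|L].
  - apply lt_INR in L; apply Rgt_not_eq, Hpos; lra.
  - assert (L' : (y < x)%nat) by lia; apply lt_INR in L'.
    replace (PI * ((INR y - INR x) / INR N)) with (- (PI * ((INR x - INR y) / INR N)))
      by (field; lra).
    rewrite sin_neg; apply Ropp_neq_0_compat, Rgt_not_eq, Hpos; lra.
Qed.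

Lemma sum_n_cos_orthogonality N x y : (x < N)%nat -> (y < N)%nat ->
  sum_n (fun m => cos (2 * PI * (INR y - INR x) / INR N * INR m)) (N - 1)
  = if Nat.eqb x y then INR N else 0.
Proof.
  intros Hx Hy; assert (HN : 0 < INR N) by (apply lt_0_INR; lia).
  destruct (Nat.eqb_spec x y) as [<-|Hxy].
  - rewrite (sum_n_Rext _ (fun _ => 1)), sum_n_const.
    + replace (S (N - 1)) with N by lia; lra.
    + intros; replace (2 * PI * (INR x - INR x) / INR N * INR k) with 0 by (field; lra).
      apply cos_0.
  - set (a := 2 * PI * (INR y - INR x) / INR N).
    pose proof (sum_n_cos_mul a (N - 1)) as T.
    replace (a * (INR (N - 1) + 1 / 2)) with (- (a / 2) + 2 * PI * (INR y - INR x)) in T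
      by (rewrite minus_INR by lia; unfold a; simpl; field; lra).
    rewrite sin_add_2PI_diff, sin_neg in T.
    apply Rmult_eq_reg_l with (2 * sin (a / 2)); [rewrite T; ring|].
    pose proof (sin_PI_frac_neq_0 N x y Hx Hy Hxy) as Hne; fold a in Hne; lra.
Qed.

Lemma sum_n_sin_orthogonality N x y : (x < N)%nat -> (y < N)%nat ->
  sum_n (fun m => sin (2 * PI * (INR y - INR x) / INR N * INR m)) (N - 1) = 0.
Proof.
  intros Hx Hy; assert (HN : 0 < INR N) by (apply lt_0_INR; lia).
  destruct (Nat.eq_dec x y) as [<-|Hxy].
  - rewrite (sum_n_Rext _ (fun _ => 0)), sum_n_const; [lra|].
    intros; replace (2 * PI * (INR x - INR x) / INR N * INR k) with 0 by (field; lra).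
    apply sin_0.
  - set (a := 2 * PI * (INR y - INR x) / INR N).
    pose proof (sum_n_sin_mul a (N - 1)) as T.
    replace (a * (INR (N - 1) + 1 / 2)) with (- (a / 2) + 2 * PI * (INR y - INR x)) in T
      by (rewrite minus_INR by lia; unfold a; simpl; field; lra).
    rewrite cos_add_2PI_diff, cos_neg in T.
    apply Rmult_eq_reg_l with (2 * sin (a / 2)); [rewrite T; ring|].
    pose proof (sin_PI_frac_neq_0 N x y Hx Hy Hxy) as Hne; fold a in Hne; lra.
Qed.

(* Real and imaginary parts of the DFT [m |-> sum_x chi(-x m) (p x + i q x)]. *)
Definition dft_angle (N x m : nat) : R := 2 * PI * (- (INR x * INR m)) / INR N.

Definition dft_re N (p q : nat -> R) m : R :=
  sum_n (fun x => cos (dft_angle N x m) * p x - sin (dft_angle N x m) * q x) (N - 1).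

Definition dft_im N (p q : nat -> R) m : R :=
  sum_n (fun x => cos (dft_angle N x m) * q x + sin (dft_angle N x m) * p x) (N - 1).

Lemma dft_Parseval N p q : (0 < N)%nat ->
  sum_n (fun m => dft_re N p q m ^ 2 + dft_im N p q m ^ 2) (N - 1)
  = INR N * sum_n (fun x => p x ^ 2 + q x ^ 2) (N - 1).
Proof.
  intros HN0; assert (HN : 0 < INR N) by (apply lt_0_INR; lia).
  set (n := (N - 1)%nat).
  set (K := fun m x y =>
    cos (2 * PI * (INR y - INR x) / INR N * INR m) * (p x * p y + q x * q y)
    + sin (2 * PI * (INR x - INR y) / INR N * INR m) * (q x * p y - p x * q y)).
  transitivity (sum_n (fun m => sum_n (fun x => sum_n (fun y => K m x y) n) n) n).
  { apply sum_n_Rext; intros m _; unfold dft_re, dft_im; fold n; rewrite !sum_n_sqr.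
    rewrite <- sum_n_Rplus; apply sum_n_Rext; intros x _.
    rewrite <- sum_n_Rplus; apply sum_n_Rext; intros y _; unfold K.
    replace (2 * PI * (INR y - INR x) / INR N * INR m)
      with (dft_angle N x m - dft_angle N y m) by (unfold dft_angle; field; lra).
    replace (2 * PI * (INR x - INR y) / INR N * INR m)
      with (dft_angle N y m - dft_angle N x m) by (unfold dft_angle; field; lra).
    rewrite cos_minus, sin_minus; ring. }
  rewrite (sum_n_switch (fun m x => sum_n (fun y => K m x y) n)).
  rewrite (sum_n_Rext _ (fun x => INR N * (p x ^ 2 + q x ^ 2))), sum_n_Rmult_l; [reflexivity|].
  intros x Hx; rewrite (sum_n_switch (fun m y => K m x y)).
  rewrite (sum_n_Rext _ (fun y => if Nat.eqb x y then INR N * (p y * p y + q y * q y) else 0)).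
  - rewrite sum_n_delta by auto; ring.
  - intros y Hy; unfold K; rewrite sum_n_Rplus, !sum_n_Rmult_r.
    rewrite sum_n_cos_orthogonality, sum_n_sin_orthogonality by (unfold n in *; lia).
    destruct (Nat.eqb_spec x y); [subst|]; ring.
Qed.

Lemma fst_sum_n (F : nat -> C) n : fst (sum_n F n) = sum_n (fun k => fst (F k)) n.
Proof.
  induction n as [|n IH]; [now rewrite !sum_O|].
  now rewrite sum_Sn, sum_n_RSn, <- IH.
Qed.

Lemma snd_sum_n (F : nat -> C) n : snd (sum_n F n) = sum_n (fun k => snd (F k)) n.
Proof.
  induction n as [|n IH]; [now rewrite !sum_O|].
  now rewrite sum_Sn, sum_n_RSn, <- IH.
Qed.

Lemma fst_RtoC_Cmult a z : fst (Cmult (RtoC a) z) = a * fst z.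
Proof. destruct z; simpl; ring. Qed.

Lemma snd_RtoC_Cmult a z : snd (Cmult (RtoC a) z) = a * snd z.
Proof. destruct z; simpl; ring. Qed.

Lemma fst_Cmult_RtoC a z : fst (Cmult z (RtoC a)) = fst z * a.
Proof. destruct z; simpl; ring. Qed.

Lemma snd_Cmult_RtoC a z : snd (Cmult z (RtoC a)) = snd z * a.
Proof. destruct z; simpl; ring. Qed.

Lemma Cmod_sqr z : Cmod z ^ 2 = fst z ^ 2 + snd z ^ 2.
Proof.
  unfold Cmod; apply pow2_sqrt.
  pose proof (pow2_ge_0 (fst z)); pose proof (pow2_ge_0 (snd z)); lra.
Qed.

Lemma Cmod_le_Rabs_fst_snd z : Cmod z <= Rabs (fst z) + Rabs (snd z).
Proof.
  pose proof (Rabs_pos (fst z)); pose proof (Rabs_pos (snd z)).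
  unfold Cmod; rewrite <- (sqrt_pow2 (Rabs (fst z) + Rabs (snd z))) by lra.
  apply sqrt_le_1_alt; rewrite <- (pow2_abs (fst z)), <- (pow2_abs (snd z)); nra.
Qed.

(* The two-dimensional transform is the DFT in [x1] of the DFTs in [x2] of the rows. *)
Definition row_dft_re N f m2 x1 : R := dft_re N (gN N f x1) (fun _ => 0) m2.
Definition row_dft_im N f m2 x1 : R := dft_im N (gN N f x1) (fun _ => 0) m2.

Lemma ghat_re_dft N f m1 m2 : (0 < N)%nat ->
  fst (ghat N f m1 m2) = / INR N * dft_re N (row_dft_re N f m2) (row_dft_im N f m2) m1.
Proof.
  intros HN0; assert (HN : 0 < INR N) by (apply lt_0_INR; lia).
  unfold ghat, sumZN; rewrite fst_RtoC_Cmult, fst_sum_n; f_equal.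
  apply sum_n_Rext; intros x1 _; rewrite fst_sum_n.
  unfold row_dft_re, row_dft_im, dft_re, dft_im.
  rewrite <- !sum_n_Rmult_l, <- sum_n_Rminus; apply sum_n_Rext; intros x2 _.
  rewrite fst_Cmult_RtoC; unfold chi; simpl fst.
  replace (2 * PI * - (INR x1 * INR m1 + INR x2 * INR m2) / INR N)
    with (dft_angle N x1 m1 + dft_angle N x2 m2) by (unfold dft_angle; field; lra).
  rewrite cos_plus; ring.
Qed.

Lemma ghat_im_dft N f m1 m2 : (0 < N)%nat ->
  snd (ghat N f m1 m2) = / INR N * dft_im N (row_dft_re N f m2) (row_dft_im N f m2) m1.
Proof.
  intros HN0; assert (HN : 0 < INR N) by (apply lt_0_INR; lia).
  unfold ghat, sumZN; rewrite snd_RtoC_Cmult, snd_sum_n; f_equal.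
  apply sum_n_Rext; intros x1 _; rewrite snd_sum_n.
  unfold row_dft_re, row_dft_im, dft_re, dft_im.
  rewrite <- !sum_n_Rmult_l, <- sum_n_Rplus; apply sum_n_Rext; intros x2 _.
  rewrite snd_Cmult_RtoC; unfold chi; simpl snd.
  replace (2 * PI * - (INR x1 * INR m1 + INR x2 * INR m2) / INR N)
    with (dft_angle N x1 m1 + dft_angle N x2 m2) by (unfold dft_angle; field; lra).
  rewrite sin_plus; ring.
Qed.

Lemma ghat_Parseval N f : (0 < N)%nat ->
  sumZN N (fun m1 => sumZN N (fun m2 => Cmod (ghat N f m1 m2) ^ 2))
  = torus_sum N (rescale N (fun x y => f x y ^ 2)).
Proof.
  intros HN0; assert (HN : 0 < INR N) by (apply lt_0_INR; lia).
  unfold sumZN.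
  rewrite (sum_n_Rext _ (fun m1 => sum_n (fun m2 => / INR N ^ 2 *
             (dft_re N (row_dft_re N f m2) (row_dft_im N f m2) m1 ^ 2 + dft_im N (row_dft_re N f m2) (row_dft_im N f m2) m1 ^ 2)) (N - 1))).
  2:{ intros m1 _; apply sum_n_Rext; intros m2 _.
      rewrite Cmod_sqr, ghat_re_dft, ghat_im_dft by auto; field; lra. }
  rewrite (sum_n_switch (fun m1 m2 => / INR N ^ 2 *
             (dft_re N (row_dft_re N f m2) (row_dft_im N f m2) m1 ^ 2 + dft_im N (row_dft_re N f m2) (row_dft_im N f m2) m1 ^ 2))).
  rewrite (sum_n_Rext _ (fun m2 => / INR N * sum_n (fun x1 => row_dft_re N f m2 x1 ^ 2 + row_dft_im N f m2 x1 ^ 2) (N - 1))).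
  2:{ intros m2 _; rewrite sum_n_Rmult_l, dft_Parseval by auto; field; lra. }
  rewrite sum_n_Rmult_l, (sum_n_switch (fun m2 x1 => row_dft_re N f m2 x1 ^ 2 + row_dft_im N f m2 x1 ^ 2)).
  rewrite (sum_n_Rext _ (fun x1 => INR N * sum_n (fun x2 => gN N f x1 x2 ^ 2) (N - 1))).
  2:{ intros x1 _; unfold row_dft_re, row_dft_im; rewrite dft_Parseval by auto.
      f_equal; apply sum_n_Rext; intros; ring. }
  rewrite sum_n_Rmult_l; unfold torus_sum, rescale, gN; R_eq; field; lra.
Qed.

(** * Decay of the Fourier coefficients *)

Lemma torus_sum_ext N A B : (forall a b, A a b = B a b) -> torus_sum N A = torus_sum N B.
Proof. intros H; unfold torus_sum; apply sum_n_Rext; intros; apply sum_n_Rext; auto. Qed.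

Lemma torus_sum_plus N A B :
  torus_sum N (fun a b => A a b + B a b) = torus_sum N A + torus_sum N B.
Proof. unfold torus_sum; rewrite <- sum_n_Rplus; apply sum_n_Rext; intros; apply sum_n_Rplus. Qed.

Lemma torus_sum_minus N A B :
  torus_sum N (fun a b => A a b - B a b) = torus_sum N A - torus_sum N B.
Proof. unfold torus_sum; rewrite <- sum_n_Rminus; apply sum_n_Rext; intros; apply sum_n_Rminus. Qed.

Lemma torus_sum_Rmult_l N c A : torus_sum N (fun a b => c * A a b) = c * torus_sum N A.
Proof. unfold torus_sum; rewrite <- sum_n_Rmult_l; apply sum_n_Rext; intros; apply sum_n_Rmult_l. Qed.

Lemma torus_sum_Rabs_le N A B : (0 < N)%nat -> (forall a b, Rabs (A a b) <= B) ->
  Rabs (torus_sum N A) <= INR N * (INR N * B).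
Proof.
  intros HN H; unfold torus_sum; replace (INR N) with (INR (S (N - 1))) by (f_equal; lia).
  apply sum_n_Rabs_le; intros; apply sum_n_Rabs_le; auto.
Qed.

Lemma sum_n_translate_periodic (H : R -> R) N e : (0 < N)%nat -> e = 1 \/ e = -1 ->
  (forall a, H (a + INR N) = H a) ->
  sum_n (fun x => H (INR x + e)) (N - 1) = sum_n (fun x => H (INR x)) (N - 1).
Proof.
  intros HN He Hper.
  assert (Hshift : forall H : R -> R, (forall a, H (a + INR N) = H a) ->
            sum_n (fun x => H (INR x + 1)) (N - 1) = sum_n (fun x => H (INR x)) (N - 1)).
  { clear H Hper; intros H Hper.
    pose proof (sum_n_Sl (fun x => H (INR x)) (N - 1)) as E1.
    rewrite sum_n_RSn in E1; replace (S (N - 1)) with N in E1 by lia.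
    rewrite <- (Rplus_0_l (INR N)), Hper in E1.
    rewrite (sum_n_Rext _ (fun x => H (INR (S x)))) by (intros; now rewrite S_INR).
    change (INR 0) with 0 in E1; lra. }
  destruct He as [-> | ->]; [now apply Hshift|].
  rewrite <- (Hshift (fun a => H (a + -1))).
  - apply sum_n_Rext; intros; f_equal; ring.
  - intros a; replace (a + INR N + -1) with ((a + -1) + INR N) by ring; apply Hper.
Qed.

Lemma torus_sum_translate_l N Phi e : (0 < N)%nat -> e = 1 \/ e = -1 ->
  (forall a b, Phi (a + INR N) b = Phi a b) ->
  torus_sum N (fun a b => Phi (a + e) b) = torus_sum N Phi.
Proof.
  intros HN He Hper; unfold torus_sum.
  apply (sum_n_translate_periodic (fun a => sum_n (fun x2 => Phi a (INR x2)) (N - 1)) N e HN He).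
  intros a; apply sum_n_Rext; intros; apply Hper.
Qed.

Lemma torus_sum_translate_r N Phi e : (0 < N)%nat -> e = 1 \/ e = -1 ->
  (forall a b, Phi a (b + INR N) = Phi a b) ->
  torus_sum N (fun a b => Phi a (b + e)) = torus_sum N Phi.
Proof.
  intros HN He Hper; unfold torus_sum; apply sum_n_Rext; intros.
  apply (sum_n_translate_periodic (fun b => Phi (INR k) b) N e HN He); auto.
Qed.

Definition discrete_Laplacian (G : R -> R -> R) (a b : R) : R :=
  G (a + 1) b + G (a - 1) b + G a (b + 1) + G a (b - 1) - 4 * G a b.

(* Summation by parts: the plane waves [T (u a + v b)], [T = cos] or [sin], are
   eigenfunctions of the discrete Laplacian with eigenvalue [2 cos u + 2 cos v - 4]. *)
Lemma torus_sum_Laplacian N (T : R -> R) (G : R -> R -> R) u v : (0 < N)%nat ->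
  (forall w s, T (w - s) + T (w + s) = 2 * cos s * T w) ->
  (forall w, T (w + u * INR N) = T w) -> (forall w, T (w + v * INR N) = T w) ->
  (forall a b, G (a + INR N) b = G a b) -> (forall a b, G a (b + INR N) = G a b) ->
  torus_sum N (fun a b => T (u * a + v * b) * discrete_Laplacian G a b)
  = (2 * cos u + 2 * cos v - 4) * torus_sum N (fun a b => T (u * a + v * b) * G a b).
Proof.
  intros HN Htr Hu Hv HG1 HG2.
  set (W := fun (e1 e2 : R) => torus_sum N (fun a b => T (u * a + v * b - (u * e1 + v * e2)) * G a b)).
  assert (Hl : forall e, e = 1 \/ e = -1 ->
             torus_sum N (fun a b => T (u * a + v * b) * G (a + e) b) = W e 0).
  { intros e He; unfold W.
    rewrite <- (torus_sum_translate_l N (fun a b => T (u * a + v * b - (u * e + v * 0)) * G a b) e HN He).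
    - apply torus_sum_ext; intros a b; do 2 f_equal; ring.
    - intros a b; rewrite HG1, <- (Hu (u * a + v * b - (u * e + v * 0))); do 2 f_equal; ring. }
  assert (Hr : forall e, e = 1 \/ e = -1 ->
             torus_sum N (fun a b => T (u * a + v * b) * G a (b + e)) = W 0 e).
  { intros e He; unfold W.
    rewrite <- (torus_sum_translate_r N (fun a b => T (u * a + v * b - (u * 0 + v * e)) * G a b) e HN He).
    - apply torus_sum_ext; intros a b; do 2 f_equal; ring.
    - intros a b; rewrite HG2, <- (Hv (u * a + v * b - (u * 0 + v * e))); do 2 f_equal; ring. }
  transitivity (torus_sum N (fun a b => T (u * a + v * b) * G (a + 1) b)
              + torus_sum N (fun a b => T (u * a + v * b) * G (a + -1) b)
              + torus_sum N (fun a b => T (u * a + v * b) * G a (b + 1))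
              + torus_sum N (fun a b => T (u * a + v * b) * G a (b + -1))
              - 4 * torus_sum N (fun a b => T (u * a + v * b) * G a b)).
  { rewrite <- torus_sum_Rmult_l, <- !torus_sum_plus, <- torus_sum_minus.
    apply torus_sum_ext; intros a b; unfold discrete_Laplacian.
    replace (a - 1) with (a + -1) by ring; replace (b - 1) with (b + -1) by ring; ring. }
  rewrite Hl, Hl, Hr, Hr by auto; unfold W.
  rewrite <- torus_sum_Rmult_l, <- torus_sum_Rmult_l, <- !torus_sum_plus, <- torus_sum_minus.
  apply torus_sum_ext; intros a b; set (w := u * a + v * b).
  replace (w - (u * 1 + v * 0)) with (w - u) by ring.
  replace (w - (u * -1 + v * 0)) with (w + u) by ring.
  replace (w - (u * 0 + v * 1)) with (w - v) by ring.
  replace (w - (u * 0 + v * -1)) with (w + v) by ring.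
  replace (w - (u * 0 + v * 0)) with w by ring.
  transitivity ((T (w - u) + T (w + u) + (T (w - v) + T (w + v)) - 4 * T w) * G a b); [ring|].
  rewrite !Htr; ring.
Qed.

Lemma rescale_periodic N f : (0 < N)%nat -> periodic1 f ->
  (forall a b, rescale N f (a + INR N) b = rescale N f a b) /\
  (forall a b, rescale N f a (b + INR N) = rescale N f a b).
Proof.
  intros HN P; assert (0 < INR N) by (apply lt_0_INR; lia); unfold rescale; split; intros a b.
  - replace ((a + INR N) / INR N) with (a / INR N + 1) by (field; lra); apply P.
  - replace ((b + INR N) / INR N) with (b / INR N + 1) by (field; lra); apply P.
Qed.

Lemma discrete_Laplacian_rescale_bound N f : (0 < N)%nat -> periodic1 f -> C2 f ->
  forall a b, Rabs (discrete_Laplacian (rescale N f) a b) <= 4 * C2norm f / INR N ^ 2.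
Proof.
  intros HN P Hc a b; assert (HN' : 0 < INR N) by (apply lt_0_INR; lia).
  destruct (C2_is_derive f Hc) as (d1 & d11 & d2 & d22).
  set (x := a / INR N); set (y := b / INR N); set (h := 1 / INR N).
  pose proof (second_difference_bound (fun t => f t y) (fun t => D1 f t y)
    (fun t => D1 (D1 f) t y) (C2norm f) (fun t => d1 t y) (fun t => d11 t y)
    (fun t => proj1 (proj2 (proj2 (proj2 (C2norm_bounds f P Hc t y))))) x h) as Hx.
  pose proof (second_difference_bound (fun t => f x t) (fun t => D2 f x t)
    (fun t => D2 (D2 f) x t) (C2norm f) (fun t => d2 x t) (fun t => d22 x t)
    (fun t => proj2 (proj2 (proj2 (proj2 (C2norm_bounds f P Hc x t))))) y h) as Hy.
  cbv beta in Hx, Hy; unfold discrete_Laplacian, rescale.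
  replace ((a + 1) / INR N) with (x + h) by (unfold x, h; field; lra).
  replace ((a - 1) / INR N) with (x - h) by (unfold x, h; field; lra).
  replace ((b + 1) / INR N) with (y + h) by (unfold y, h; field; lra).
  replace ((b - 1) / INR N) with (y - h) by (unfold y, h; field; lra).
  fold x y.
  replace (4 * C2norm f / INR N ^ 2) with (2 * C2norm f * h ^ 2 + 2 * C2norm f * h ^ 2)
    by (unfold h; field; lra).
  eapply Rle_trans; [|apply Rplus_le_compat; [apply Hx | apply Hy]].
  eapply Rle_trans; [|apply Rabs_triang]; right; f_equal; ring.
Qed.

Lemma ghat_torus_sum N f m1 m2 : (0 < N)%nat ->
  let u := - (2 * PI * INR m1 / INR N) in let v := - (2 * PI * INR m2 / INR N) in
  fst (ghat N f m1 m2) = / INR N * torus_sum N (fun a b => cos (u * a + v * b) * rescale N f a b) /\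
  snd (ghat N f m1 m2) = / INR N * torus_sum N (fun a b => sin (u * a + v * b) * rescale N f a b).
Proof.
  intros HN0 u v; assert (HN : 0 < INR N) by (apply lt_0_INR; lia).
  unfold ghat, sumZN, torus_sum; split;
    [rewrite fst_RtoC_Cmult, fst_sum_n | rewrite snd_RtoC_Cmult, snd_sum_n]; f_equal;
    apply sum_n_Rext; intros x1 _;
    [rewrite fst_sum_n | rewrite snd_sum_n]; apply sum_n_Rext; intros x2 _;
    [rewrite fst_Cmult_RtoC | rewrite snd_Cmult_RtoC]; unfold chi, rescale, gN, u, v; simpl;
    do 2 f_equal; field; lra.
Qed.

Lemma plane_wave_Laplacian_bound N f (T : R -> R) u v : (0 < N)%nat -> periodic1 f -> C2 f ->
  (forall w s, T (w - s) + T (w + s) = 2 * cos s * T w) ->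
  (forall w, T (w + u * INR N) = T w) -> (forall w, T (w + v * INR N) = T w) ->
  (forall w, Rabs (T w) <= 1) ->
  (4 - 2 * cos u - 2 * cos v) * Rabs (torus_sum N (fun a b => T (u * a + v * b) * rescale N f a b))
  <= 4 * C2norm f.
Proof.
  intros HN0 P Hc Htr Hu Hv HT; assert (HN : 0 < INR N) by (apply lt_0_INR; lia).
  destruct (rescale_periodic N f HN0 P) as [G1 G2].
  assert (Hl : 0 <= 4 - 2 * cos u - 2 * cos v)
    by (pose proof (COS_bound u); pose proof (COS_bound v); lra).
  rewrite <- (Rabs_right (4 - 2 * cos u - 2 * cos v)), <- Rabs_mult by lra.
  replace ((4 - 2 * cos u - 2 * cos v) * torus_sum N (fun a b => T (u * a + v * b) * rescale N f a b))
    with (- torus_sum N (fun a b => T (u * a + v * b) * discrete_Laplacian (rescale N f) a b))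
    by (rewrite torus_sum_Laplacian; auto; ring).
  rewrite Rabs_Ropp.
  eapply Rle_trans; [apply torus_sum_Rabs_le with (B := 4 * C2norm f / INR N ^ 2); auto|].
  - intros a b; rewrite Rabs_mult, <- (Rmult_1_l (4 * C2norm f / INR N ^ 2)).
    apply Rmult_le_compat; auto using Rabs_pos.
    apply discrete_Laplacian_rescale_bound; auto.
  - right; field; lra.
Qed.

Lemma cos_minus_add w s : cos (w - s) + cos (w + s) = 2 * cos s * cos w.
Proof. rewrite cos_minus, cos_plus; ring. Qed.

Lemma sin_minus_add w s : sin (w - s) + sin (w + s) = 2 * cos s * sin w.
Proof. rewrite sin_minus, sin_plus; ring. Qed.

Lemma ghat_decay N f m1 m2 : (0 < N)%nat -> periodic1 f -> C2 f ->
  (4 - 2 * cos (2 * PI * INR m1 / INR N) - 2 * cos (2 * PI * INR m2 / INR N))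
    * Cmod (ghat N f m1 m2) <= 8 * C2norm f / INR N.
Proof.
  intros HN0 P Hc; assert (HN : 0 < INR N) by (apply lt_0_INR; lia).
  destruct (ghat_torus_sum N f m1 m2 HN0) as [Ere Eim].
  set (u := - (2 * PI * INR m1 / INR N)) in *; set (v := - (2 * PI * INR m2 / INR N)) in *.
  rewrite <- (cos_neg (2 * PI * INR m1 / INR N)), <- (cos_neg (2 * PI * INR m2 / INR N)); fold u v.
  assert (Pu : forall w, w + u * INR N = w + 2 * PI * (INR 0 - INR m1))
    by (intros; unfold u; simpl; field; lra).
  assert (Pv : forall w, w + v * INR N = w + 2 * PI * (INR 0 - INR m2))
    by (intros; unfold v; simpl; field; lra).
  pose proof (plane_wave_Laplacian_bound N f cos u v HN0 P Hc cos_minus_add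
    (fun w => eq_trans (f_equal cos (Pu w)) (cos_add_2PI_diff w m1 0))
    (fun w => eq_trans (f_equal cos (Pv w)) (cos_add_2PI_diff w m2 0))
    (fun w => Rabs_le _ _ (COS_bound w))) as Bre.
  pose proof (plane_wave_Laplacian_bound N f sin u v HN0 P Hc sin_minus_add
    (fun w => eq_trans (f_equal sin (Pu w)) (sin_add_2PI_diff w m1 0))
    (fun w => eq_trans (f_equal sin (Pv w)) (sin_add_2PI_diff w m2 0))
    (fun w => Rabs_le _ _ (SIN_bound w))) as Bim.
  assert (Hl : 0 <= 4 - 2 * cos u - 2 * cos v)
    by (pose proof (COS_bound u); pose proof (COS_bound v); lra).
  eapply Rle_trans; [apply Rmult_le_compat_l; [exact Hl | apply Cmod_le_Rabs_fst_snd]|].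
  rewrite Ere, Eim, !Rabs_mult, Rabs_right by (apply Rle_ge, Rlt_le, Rinv_0_lt_compat; lra).
  assert (0 < / INR N) by (apply Rinv_0_lt_compat; lra).
  apply Rle_trans with (/ INR N * (4 * C2norm f) + / INR N * (4 * C2norm f)); [nra | right; field; lra].
Qed.

(** * Lattice sums *)

Definition inv_sqr_norm (a b : nat) : R :=
  if (Nat.eqb a 0 && Nat.eqb b 0)%bool then 0 else / (INR a ^ 2 + INR b ^ 2).

Lemma inv_sqr_norm_eq a b : (a <> 0 \/ b <> 0)%nat ->
  0 < INR a ^ 2 + INR b ^ 2 /\ inv_sqr_norm a b = / (INR a ^ 2 + INR b ^ 2).
Proof.
  intros H; pose proof (pos_INR a); pose proof (pos_INR b); split.
  - destruct H; [assert (0 < INR a) | assert (0 < INR b)]; try (apply lt_0_INR; lia); nra.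
  - unfold inv_sqr_norm; destruct (Nat.eqb_spec a 0), (Nat.eqb_spec b 0); simpl; auto; lia.
Qed.

Lemma inv_sqr_norm_nonneg a b : 0 <= inv_sqr_norm a b.
Proof.
  destruct (Nat.eq_dec a 0) as [->|Ha]; [destruct (Nat.eq_dec b 0) as [->|Hb]|].
  - unfold inv_sqr_norm; simpl; lra.
  - destruct (inv_sqr_norm_eq 0 b) as [Hp ->]; auto; apply Rlt_le, Rinv_0_lt_compat; auto.
  - destruct (inv_sqr_norm_eq a b) as [Hp ->]; auto; apply Rlt_le, Rinv_0_lt_compat; auto.
Qed.

(* [a^2 + b^2 >= (a + b)^2 / 2 >= (a + b) (a + b + 1) / 4]: a telescoping majorant. *)
Lemma inv_sqr_norm_le a b : (a <> 0 \/ b <> 0)%nat ->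
  inv_sqr_norm a b <= 4 / ((INR a + INR b) * (INR a + INR b + 1)).
Proof.
  intros H; destruct (inv_sqr_norm_eq a b H) as [Hq ->].
  pose proof (pos_INR a); pose proof (pos_INR b).
  assert (Hs : 1 <= INR a + INR b).
  { destruct H; [assert (1 <= INR a) | assert (1 <= INR b)]; try (apply (le_INR 1); lia); lra. }
  replace (/ (INR a ^ 2 + INR b ^ 2)) with (4 / (4 * (INR a ^ 2 + INR b ^ 2))) by (field; lra).
  unfold Rdiv; apply Rmult_le_compat_l; [lra|]; apply Rinv_le_contravar; [nra|].
  pose proof (pow2_ge_0 (INR a - INR b)); nra.
Qed.

Lemma sum_n_telescoping_inv (A : R) n : 0 < A ->
  sum_n (fun b => 4 / ((A + INR b) * (A + INR b + 1))) n = 4 / A - 4 / (A + INR n + 1).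
Proof.
  intros HA; induction n as [|n IH].
  - rewrite sum_O; simpl; R_eq; field; lra.
  - rewrite sum_n_RSn, IH, S_INR; pose proof (pos_INR n); R_eq; field; lra.
Qed.

Lemma row_sum_inv_sqr_norm_pos a N : (1 <= a)%nat -> sum_n (fun b => inv_sqr_norm a b) N <= 4 / INR a.
Proof.
  intros Ha; assert (HA : 0 < INR a) by (apply lt_0_INR; lia).
  eapply Rle_trans.
  - apply sum_n_Rle with (b := fun b => 4 / ((INR a + INR b) * (INR a + INR b + 1))).
    intros; apply inv_sqr_norm_le; lia.
  - rewrite sum_n_telescoping_inv by auto; pose proof (pos_INR N).
    assert (0 < 4 / (INR a + INR N + 1)) by (apply Rdiv_lt_0_compat; lra); lra.
Qed.

Lemma row_sum_inv_sqr_norm_0 N : (1 <= N)%nat -> sum_n (fun b => inv_sqr_norm 0 b) N <= 4.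
Proof.
  intros HN; replace N with (S (N - 1)) by lia; rewrite sum_n_Sl.
  replace (inv_sqr_norm 0 0) with 0 by reflexivity.
  eapply Rle_trans; [apply Rplus_le_compat_l, sum_n_Rle with
    (b := fun b => 4 / ((1 + INR b) * (1 + INR b + 1)))|].
  - intros k _; eapply Rle_trans; [apply inv_sqr_norm_le; lia|].
    rewrite S_INR; simpl INR; right; f_equal; ring.
  - rewrite sum_n_telescoping_inv by lra; pose proof (pos_INR (N - 1)).
    assert (0 < 4 / (1 + INR (N - 1) + 1)) by (apply Rdiv_lt_0_compat; lra).
    replace (4 / 1) with 4 by field; lra.
Qed.

Lemma sum_n_harmonic_le n : sum_n (fun a => / (INR a + 1)) n <= 1 + ln (INR n + 1).
Proof.
  induction n as [|n IH].
  - rewrite sum_O; simpl; rewrite Rplus_0_l, ln_1; lra.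
  - rewrite sum_n_RSn, S_INR; pose proof (pos_INR n).
    assert (Hstep : / (INR n + 1 + 1) <= ln (INR n + 1 + 1) - ln (INR n + 1)).
    { pose proof (exp_ineq1_le (ln ((INR n + 1) / (INR n + 1 + 1)))) as E.
      rewrite exp_ln in E by (apply Rdiv_lt_0_compat; lra).
      rewrite ln_div in E by lra.
      replace ((INR n + 1) / (INR n + 1 + 1)) with (1 - / (INR n + 1 + 1)) in E by (field; lra).
      lra. }
    lra.
Qed.

Lemma sum_inv_sqr_norm_le N : (1 <= N)%nat ->
  sum_n (fun a => sum_n (fun b => inv_sqr_norm a b) N) N <= 8 + 4 * ln (INR N).
Proof.
  intros HN; replace N with (S (N - 1)) at 1 by lia; rewrite sum_n_Sl.
  pose proof (row_sum_inv_sqr_norm_0 N HN).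
  assert (sum_n (fun a => sum_n (fun b => inv_sqr_norm (S a) b) N) (N - 1)
          <= 4 * sum_n (fun a => / (INR a + 1)) (N - 1)).
  { rewrite <- sum_n_Rmult_l; apply sum_n_Rle; intros k _.
    eapply Rle_trans; [apply row_sum_inv_sqr_norm_pos; lia|].
    rewrite S_INR; pose proof (pos_INR k); right; field; lra. }
  pose proof (sum_n_harmonic_le (N - 1)) as Hh.
  rewrite minus_INR in Hh by lia; simpl INR in Hh.
  replace (INR N - 1 + 1) with (INR N) in Hh by ring; lra.
Qed.

Definition cyclic_abs (N m : nat) : nat := Nat.min m (N - m).

Lemma sum_n_pred_le (F : nat -> R) N : (forall k, 0 <= F k) ->
  sum_n F (N - 1) <= sum_n F N.
Proof.
  intros HF; destruct N as [|n]; [simpl; lra|].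
  replace (S n - 1)%nat with n by lia; rewrite sum_n_RSn; specialize (HF (S n)); lra.
Qed.

Lemma sum_n_cyclic_abs_le (F : nat -> R) N : (forall k, 0 <= F k) ->
  sum_n (fun m => F (cyclic_abs N m)) (N - 1) <= 2 * sum_n F N.
Proof.
  intros HF.
  apply Rle_trans with (sum_n F (N - 1) + sum_n (fun m => F (N - m)%nat) (N - 1)).
  - rewrite <- sum_n_Rplus; apply sum_n_Rle; intros m _.
    pose proof (HF m); pose proof (HF (N - m)%nat).
    unfold cyclic_abs; destruct (Nat.min_spec m (N - m)) as [[_ ->]|[_ ->]]; lra.
  - pose proof (sum_n_pred_le F N HF).
    pose proof (sum_n_pred_le (fun m => F (N - m)%nat) N (fun k => HF _)).
    rewrite sum_n_rev in *; lra.
Qed.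

Lemma sum_inv_sqr_norm_cyclic_le N :
  sum_n (fun m1 => sum_n (fun m2 => inv_sqr_norm (cyclic_abs N m1) (cyclic_abs N m2)) (N - 1)) (N - 1)
  <= 4 * sum_n (fun a => sum_n (fun b => inv_sqr_norm a b) N) N.
Proof.
  set (row := fun a => sum_n (fun b => inv_sqr_norm a b) N).
  apply Rle_trans with (sum_n (fun m1 => 2 * row (cyclic_abs N m1)) (N - 1)).
  - apply sum_n_Rle; intros m1 _.
    apply (sum_n_cyclic_abs_le (fun b => inv_sqr_norm (cyclic_abs N m1) b)).
    intros; apply inv_sqr_norm_nonneg.
  - rewrite sum_n_Rmult_l.
    assert (sum_n (fun m1 => row (cyclic_abs N m1)) (N - 1) <= 2 * sum_n row N); [|lra].
    apply sum_n_cyclic_abs_le; intros; apply sum_n_nonneg; intros; apply inv_sqr_norm_nonneg.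
Qed.

Lemma PI_le_335 : PI <= 3.35.
Proof. destruct (PI_ineq 2) as [_ H]; unfold tg_alt, PI_tg in H; simpl in H; lra. Qed.

(* From the Taylor lower bound [sin t >= t - t^3/6 + t^5/120 - t^7/5040]. *)
Lemma sin_ge_half t : 0 <= t -> t <= PI / 2 -> t / 2 <= sin t.
Proof.
  intros H1 H2; pose proof PI_le_335.
  destruct (SIN t H1 ltac:(lra)) as [Hs _].
  replace (sin_lb t) with (t - t ^ 3 / 6 + t ^ 5 / 120 - t ^ 7 / 5040) in Hs
    by (unfold sin_lb, sin_approx, sin_term; simpl; field).
  assert (t <= 1.7) by lra; assert (0 <= t ^ 2) by nra; assert (t ^ 2 <= 2.89) by nra.
  assert (0 <= t ^ 5 * (42 - t ^ 2)) by (apply Rmult_le_pos; [apply pow_le|]; lra).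
  assert (t ^ 3 <= 3 * t) by (replace (t ^ 3) with (t * t ^ 2) by ring; nra).
  nra.
Qed.

(* [2 - 2 cos(2 pi m / N) = 4 sin^2(pi k / N)] with [k = cyclic_abs N m], and
   [pi k / N <= pi / 2]. *)
Lemma two_sub_two_cos_ge N m : (m < N)%nat ->
  PI ^ 2 * INR (cyclic_abs N m) ^ 2 / INR N ^ 2 <= 2 - 2 * cos (2 * PI * INR m / INR N).
Proof.
  intros Hm; assert (HN : 0 < INR N) by (apply lt_0_INR; lia); pose proof PI_RGT_0.
  replace (2 * PI * INR m / INR N) with (2 * (PI * INR m / INR N)) by (field; lra).
  rewrite cos_2a_sin.
  replace (sin (PI * INR m / INR N)) with (sin (PI * INR (cyclic_abs N m) / INR N)).
  2:{ unfold cyclic_abs; destruct (Nat.min_spec m (N - m)) as [[_ ->]|[_ ->]]; [reflexivity|].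
      rewrite minus_INR, <- sin_PI_x by lia; f_equal; field; lra. }
  assert (Hk : 2 * INR (cyclic_abs N m) <= INR N).
  { assert (HH : (2 * cyclic_abs N m <= N)%nat) by (unfold cyclic_abs; lia).
    apply le_INR in HH; rewrite mult_INR in HH; simpl in HH; lra. }
  set (t := PI * INR (cyclic_abs N m) / INR N).
  assert (Ht0 : 0 <= t).
  { unfold t; pose proof (pos_INR (cyclic_abs N m)).
    apply Rmult_le_pos; [nra | apply Rlt_le, Rinv_0_lt_compat; lra]. }
  assert (Ht1 : t <= PI / 2).
  { unfold t; apply Rmult_le_reg_r with (2 * INR N); [lra|].
    replace (PI * INR (cyclic_abs N m) / INR N * (2 * INR N))
      with (PI * (2 * INR (cyclic_abs N m))) by (field; lra).
    replace (PI / 2 * (2 * INR N)) with (PI * INR N) by field; nra. }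
  pose proof (sin_ge_half t Ht0 Ht1).
  replace (PI ^ 2 * INR (cyclic_abs N m) ^ 2 / INR N ^ 2) with (t ^ 2) by (unfold t; field; lra).
  nra.
Qed.

Lemma ghat_bound_nonzero_freq N f m1 m2 : (0 < N)%nat -> periodic1 f -> C2 f ->
  (m1 < N)%nat -> (m2 < N)%nat -> (m1 <> 0 \/ m2 <> 0)%nat ->
  Cmod (ghat N f m1 m2)
  <= 8 * C2norm f * INR N / PI ^ 2 * inv_sqr_norm (cyclic_abs N m1) (cyclic_abs N m2).
Proof.
  intros HN0 P Hc H1 H2 Hm; assert (HN : 0 < INR N) by (apply lt_0_INR; lia).
  pose proof (ghat_decay N f m1 m2 HN0 P Hc) as Hdecay.
  pose proof (two_sub_two_cos_ge N m1 H1); pose proof (two_sub_two_cos_ge N m2 H2).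
  set (k1 := cyclic_abs N m1) in *; set (k2 := cyclic_abs N m2) in *.
  destruct (inv_sqr_norm_eq k1 k2) as [Hs ->]; [unfold k1, k2, cyclic_abs; lia|].
  pose proof PI_RGT_0; pose proof (Cmod_ge_0 (ghat N f m1 m2)).
  set (lam := PI ^ 2 * (INR k1 ^ 2 + INR k2 ^ 2) / INR N ^ 2).
  assert (Hlam : 0 < lam) by (apply Rdiv_lt_0_compat; [apply Rmult_lt_0_compat|]; nra).
  assert (Hle : lam * Cmod (ghat N f m1 m2) <= 8 * C2norm f / INR N).
  { eapply Rle_trans; [|exact Hdecay]; apply Rmult_le_compat_r; auto.
    unfold lam; replace (PI ^ 2 * (INR k1 ^ 2 + INR k2 ^ 2) / INR N ^ 2)
      with (PI ^ 2 * INR k1 ^ 2 / INR N ^ 2 + PI ^ 2 * INR k2 ^ 2 / INR N ^ 2) by (field; lra).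
    lra. }
  apply Rmult_le_reg_l with lam; auto.
  eapply Rle_trans; [exact Hle | right; unfold lam; field; split; nra].
Qed.

Lemma ghat_l1_le N f : (1 <= N)%nat -> periodic1 f -> C2 f ->
  ghat_l1 N f <= Cmod (ghat N f 0 0) + 8 * C2norm f * INR N / PI ^ 2 * (4 * (8 + 4 * ln (INR N))).
Proof.
  intros HN P Hc; assert (HN' : 0 < INR N) by (apply lt_0_INR; lia).
  pose proof (C2norm_nonneg f Hc); pose proof PI_RGT_0.
  set (B := 8 * C2norm f * INR N / PI ^ 2).
  assert (HB : 0 <= B) by (unfold B; apply Rmult_le_pos; [nra | apply Rlt_le, Rinv_0_lt_compat; nra]).
  set (c := Cmod (ghat N f 0 0)).
  unfold ghat_l1, sumZN.
  apply Rle_trans with (sum_n (fun m1 => sum_n (fun m2 =>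
    (if Nat.eqb 0 m1 then if Nat.eqb 0 m2 then c else 0 else 0)
    + B * inv_sqr_norm (cyclic_abs N m1) (cyclic_abs N m2)) (N - 1)) (N - 1)).
  - apply sum_n_Rle; intros m1 Hm1; apply sum_n_Rle; intros m2 Hm2.
    pose proof (inv_sqr_norm_nonneg (cyclic_abs N m1) (cyclic_abs N m2)).
    destruct (Nat.eqb_spec 0 m1), (Nat.eqb_spec 0 m2); [subst; unfold c; nra| | |];
      rewrite Rplus_0_l; apply ghat_bound_nonzero_freq; auto; lia.
  - rewrite (sum_n_Rext _ (fun m1 => (if Nat.eqb 0 m1 then c else 0)
      + B * sum_n (fun m2 => inv_sqr_norm (cyclic_abs N m1) (cyclic_abs N m2)) (N - 1))).
    2:{ intros m1 _; rewrite sum_n_Rplus, sum_n_Rmult_l; f_equal.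
        destruct (Nat.eqb_spec 0 m1); [apply sum_n_delta; lia|].
        rewrite sum_n_const; lra. }
    rewrite sum_n_Rplus, sum_n_Rmult_l, (sum_n_delta (fun _ => c)) by lia.
    pose proof (sum_inv_sqr_norm_cyclic_le N); pose proof (sum_inv_sqr_norm_le N HN).
    apply Rplus_le_compat_l, Rmult_le_compat_l; auto; lra.
Qed.

Lemma Lipschitz_sqr (phi : R -> R) K C : 0 <= C -> (forall s, Rabs (phi s) <= C) ->
  Lipschitz phi K -> Lipschitz (fun s => phi s ^ 2) (2 * C * K).
Proof.
  intros HC Hb H s t.
  replace (phi s ^ 2 - phi t ^ 2) with ((phi s + phi t) * (phi s - phi t)) by ring.
  rewrite Rabs_mult, Rmult_assoc; apply Rmult_le_compat; auto using Rabs_pos.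
  eapply Rle_trans; [apply Rabs_triang|]; pose proof (Hb s); pose proof (Hb t); lra.
Qed.

Lemma int2_Riemann_error N f : (1 <= N)%nat -> periodic1 f -> C2 f ->
  Rabs (int2 f - torus_sum N (rescale N f) / INR N ^ 2) <= 2 * C2norm f / INR N.
Proof.
  intros HN P Hc; pose proof (C2norm_nonneg f Hc).
  replace (2 * C2norm f) with (C2norm f + C2norm f) by ring.
  apply int2_Riemann_sum_error; auto using C2_Lipschitz_l, C2_Lipschitz_r.
Qed.

Lemma int2_sqr_Riemann_error N f : (1 <= N)%nat -> periodic1 f -> C2 f ->
  Rabs (int2 (fun x y => f x y ^ 2) - torus_sum N (rescale N (fun x y => f x y ^ 2)) / INR N ^ 2)
  <= 4 * C2norm f ^ 2 / INR N.
Proof.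
  intros HN P Hc; pose proof (C2norm_nonneg f Hc).
  assert (B : forall x y, Rabs (f x y) <= C2norm f) by apply (C2norm_bounds f P Hc).
  replace (4 * C2norm f ^ 2) with (2 * C2norm f * C2norm f + 2 * C2norm f * C2norm f) by ring.
  apply int2_Riemann_sum_error; auto; try nra; intros;
    apply Lipschitz_sqr; auto using C2_Lipschitz_l, C2_Lipschitz_r.
Qed.

Lemma torus_sum_sqr_le N Phi : (1 <= N)%nat ->
  (torus_sum N Phi) ^ 2 <= INR N * (INR N * torus_sum N (fun a b => Phi a b ^ 2)).
Proof.
  intros HN; unfold torus_sum; replace (INR N) with (INR (S (N - 1))) by (f_equal; lia).
  eapply Rle_trans; [apply sum_n_sqr_le|].
  apply Rmult_le_compat_l; [apply pos_INR|].
  rewrite <- sum_n_Rmult_l; apply sum_n_Rle; intros; apply sum_n_sqr_le.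
Qed.

Lemma Riemann_sum_sqr_le N f : (1 <= N)%nat ->
  (torus_sum N (rescale N f) / INR N ^ 2) ^ 2
  <= torus_sum N (rescale N (fun x y => f x y ^ 2)) / INR N ^ 2.
Proof.
  intros HN; assert (HN' : 0 < INR N) by (apply lt_0_INR; lia).
  pose proof (torus_sum_sqr_le N (rescale N f) HN) as CS.
  replace ((torus_sum N (rescale N f) / INR N ^ 2) ^ 2)
    with ((torus_sum N (rescale N f)) ^ 2 / INR N ^ 4) by (field; lra).
  apply Rmult_le_reg_r with (INR N ^ 4); [apply pow_lt; lra|].
  replace (torus_sum N (rescale N f) ^ 2 / INR N ^ 4 * INR N ^ 4)
    with (torus_sum N (rescale N f) ^ 2) by (field; lra).
  replace (torus_sum N (rescale N (fun x y => f x y ^ 2)) / INR N ^ 2 * INR N ^ 4)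
    with (INR N * (INR N * torus_sum N (fun a b => rescale N f a b ^ 2))) by (unfold rescale; field; lra).
  exact CS.
Qed.

Lemma Rle_of_le_plus_div_INR x y K : 0 <= K ->
  (forall M : nat, (1 <= M)%nat -> x <= y + K / INR M) -> x <= y.
Proof.
  intros HK H; apply Rnot_lt_le; intro Hc.
  destruct (archimed_cor1 ((x - y) / (K + 1))) as [M [HM HM0]]; [apply Rdiv_lt_0_compat; lra|].
  specialize (H M ltac:(lia)); assert (0 < INR M) by (apply lt_0_INR; lia).
  assert (K / INR M <= K * ((x - y) / (K + 1))) by (apply Rmult_le_compat_l; lra).
  assert (K * ((x - y) / (K + 1)) < (K + 1) * ((x - y) / (K + 1)))
    by (apply Rmult_lt_compat_r; [apply Rdiv_lt_0_compat|]; lra).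
  replace ((K + 1) * ((x - y) / (K + 1))) with (x - y) in * by (field; lra).
  lra.
Qed.

(* Cauchy-Schwarz for the integral, passing to the limit in the discrete inequality
   of [Riemann_sum_sqr_le]. *)
Lemma int2_sqr_le f : periodic1 f -> C2 f -> int2 f ^ 2 <= int2 (fun x y => f x y ^ 2).
Proof.
  intros P Hc; pose proof (C2norm_nonneg f Hc).
  assert (B : forall x y, Rabs (f x y) <= C2norm f) by apply (C2norm_bounds f P Hc).
  set (C := C2norm f) in *; set (mu := int2 f); set (I := int2 (fun x y => f x y ^ 2)).
  apply (Rle_of_le_plus_div_INR _ _ (12 * C ^ 2)); [nra|]; intros M HM.
  assert (HM' : 1 <= INR M) by (apply (le_INR 1) in HM; simpl in HM; lra).
  pose proof (int2_Riemann_error M f HM P Hc) as R1.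
  pose proof (int2_sqr_Riemann_error M f HM P Hc) as R2.
  pose proof (Riemann_sum_sqr_le M f HM) as CS.
  set (S1 := torus_sum M (rescale M f) / INR M ^ 2) in *.
  set (S2 := torus_sum M (rescale M (fun x y => f x y ^ 2)) / INR M ^ 2) in *.
  fold C mu in R1; fold C I in R2.
  assert (HS1 : Rabs S1 <= C).
  { unfold S1; rewrite Rabs_div, (Rabs_right (INR M ^ 2)) by (apply pow_nonzero || apply Rle_ge, pow_le; lra).
    apply Rmult_le_reg_r with (INR M ^ 2); [apply pow_lt; lra|].
    replace (Rabs (torus_sum M (rescale M f)) / INR M ^ 2 * INR M ^ 2)
      with (Rabs (torus_sum M (rescale M f))) by (field; lra).
    replace (C * INR M ^ 2) with (INR M * (INR M * C)) by ring.
    apply torus_sum_Rabs_le; [lia | intros; apply B]. }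
  set (e := 2 * C / INR M).
  assert (He : 0 <= e) by (apply Rmult_le_pos; [lra | apply Rlt_le, Rinv_0_lt_compat; lra]).
  assert (Hmu : mu ^ 2 <= (Rabs S1 + e) ^ 2).
  { rewrite <- (pow2_abs mu); apply pow_incr; split; [apply Rabs_pos|].
    pose proof (Rabs_triang_inv mu S1); unfold e; lra. }
  assert (E1 : (Rabs S1 + e) ^ 2 = S1 ^ 2 + 4 * C * Rabs S1 / INR M + 4 * C ^ 2 / INR M ^ 2)
    by (unfold e; rewrite <- (pow2_abs S1); field; lra).
  assert (E2 : 4 * C * Rabs S1 / INR M <= 4 * C ^ 2 / INR M)
    by (unfold Rdiv; apply Rmult_le_compat_r; [apply Rlt_le, Rinv_0_lt_compat|]; nra).
  assert (E3 : 4 * C ^ 2 / INR M ^ 2 <= 4 * C ^ 2 / INR M)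
    by (unfold Rdiv; apply Rmult_le_compat_l; [nra | apply Rinv_le_contravar; nra]).
  assert (E4 : S2 <= I + 4 * C ^ 2 / INR M)
    by (pose proof (Rle_abs (S2 - I)); rewrite Rabs_minus_sym in R2; lra).
  replace (12 * C ^ 2 / INR M) with (3 * (4 * C ^ 2 / INR M)) by (field; lra).
  lra.
Qed.

(** * The Fourier ratio *)

Lemma ghat_0_bound N f : (1 <= N)%nat -> periodic1 f -> C2 f ->
  Cmod (ghat N f 0 0) <= INR N * Rabs (int2 f) + 2 * C2norm f.
Proof.
  intros HN P Hc; assert (HN' : 0 < INR N) by (apply lt_0_INR; lia).
  destruct (ghat_torus_sum N f 0 0 ltac:(lia)) as [Ere Eim]; cbv zeta in Ere, Eim.
  set (S := torus_sum N (rescale N f)).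
  assert (Hw : forall a b, - (2 * PI * INR 0 / INR N) * a + - (2 * PI * INR 0 / INR N) * b = 0)
    by (intros; simpl; field; lra).
  rewrite (torus_sum_ext _ _ (rescale N f)) in Ere by (intros; rewrite Hw, cos_0; ring).
  rewrite (torus_sum_ext _ _ (fun a b => 0 * rescale N f a b)), torus_sum_Rmult_l in Eim
    by (intros; rewrite Hw, sin_0; ring).
  fold S in Ere; pose proof (int2_Riemann_error N f HN P Hc) as Hriem; fold S in Hriem.
  eapply Rle_trans; [apply Cmod_le_Rabs_fst_snd|].
  rewrite Ere, Eim, Rmult_0_l, Rmult_0_r, Rabs_R0, Rplus_0_r, Rabs_mult.
  rewrite Rabs_right by (apply Rle_ge, Rlt_le, Rinv_0_lt_compat; lra).
  assert (Rabs (S / INR N ^ 2) <= Rabs (int2 f) + 2 * C2norm f / INR N).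
  { pose proof (Rabs_triang_inv (S / INR N ^ 2) (int2 f)); rewrite Rabs_minus_sym in Hriem; lra. }
  rewrite Rabs_div, (Rabs_right (INR N ^ 2)) in H by (apply pow_nonzero || apply Rle_ge, pow_le; lra).
  replace (/ INR N * Rabs S) with (INR N * (Rabs S / INR N ^ 2)) by (field; lra).
  replace (INR N * Rabs (int2 f) + 2 * C2norm f)
    with (INR N * (Rabs (int2 f) + 2 * C2norm f / INR N)) by (field; lra).
  apply Rmult_le_compat_l; lra.
Qed.

Lemma L2norm_pos f N : periodic1 f -> C2 f -> (exists x y, f x y <> 0) ->
  INR N * (L2norm f) ^ 2 >= 8 * (C2norm f) ^ 2 -> 0 < L2norm f.
Proof.
  intros P Hc [x0 [y0 Hf]] H.
  destruct (Rle_lt_or_eq_dec 0 (L2norm f) (sqrt_pos _)) as [Hpos|Hzero]; auto.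
  exfalso; rewrite <- Hzero in H.
  assert (C2norm f = 0) by nra.
  pose proof (proj1 (C2norm_bounds f P Hc x0 y0)); pose proof (Rabs_pos (f x0 y0)).
  apply Hf, Rabs_eq_0; lra.
Qed.

Lemma L2norm_sqr f : 0 < L2norm f -> L2norm f ^ 2 = int2 (fun x y => f x y ^ 2).
Proof.
  unfold L2norm; intros Hp; apply pow2_sqrt.
  destruct (Rle_lt_dec (int2 (fun x y => f x y ^ 2)) 0) as [h|h]; [|lra].
  rewrite sqrt_neg_0 in Hp by auto; lra.
Qed.

Lemma ghat_l2_ge N f : (1 <= N)%nat -> periodic1 f -> C2 f -> 0 < L2norm f ->
  INR N * (L2norm f) ^ 2 >= 8 * (C2norm f) ^ 2 -> INR N * L2norm f / 2 <= ghat_l2 N f.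
Proof.
  intros HN P Hc HL H; assert (HN' : 0 < INR N) by (apply lt_0_INR; lia).
  set (Q := torus_sum N (rescale N (fun x y => f x y ^ 2))).
  assert (EQ : ghat_l2 N f = sqrt Q) by (unfold ghat_l2; rewrite ghat_Parseval by lia; reflexivity).
  pose proof (int2_sqr_Riemann_error N f HN P Hc) as Hriem; fold Q in Hriem.
  rewrite <- L2norm_sqr in Hriem by auto.
  assert (4 * C2norm f ^ 2 / INR N <= L2norm f ^ 2 / 2).
  { apply Rmult_le_reg_r with (2 * INR N); [lra|].
    replace (4 * C2norm f ^ 2 / INR N * (2 * INR N)) with (8 * C2norm f ^ 2) by (field; lra).
    lra. }
  assert (HQ : L2norm f ^ 2 / 4 <= Q / INR N ^ 2)
    by (pose proof (Rle_abs (L2norm f ^ 2 - Q / INR N ^ 2)); pose proof (pow2_ge_0 (L2norm f)); lra).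
  rewrite EQ, <- (sqrt_pow2 (INR N * L2norm f / 2)) by nra.
  apply sqrt_le_1_alt.
  replace ((INR N * L2norm f / 2) ^ 2) with (INR N ^ 2 * (L2norm f ^ 2 / 4)) by field.
  replace Q with (INR N ^ 2 * (Q / INR N ^ 2)) by (field; lra).
  apply Rmult_le_compat_l; [apply pow_le; lra | exact HQ].
Qed.

Lemma ln_gt_half x : 2 <= x -> / 2 < ln x.
Proof.
  intros H; pose proof ln_lt_2; destruct (Req_dec x 2) as [->|Hx]; auto.
  pose proof (ln_increasing 2 x ltac:(lra) ltac:(lra)); lra.
Qed.

Lemma FR_le N f : periodic1 f -> C2 f -> (exists x y, f x y <> 0) -> (2 <= N)%nat ->
  INR N * (L2norm f) ^ 2 >= 8 * (C2norm f) ^ 2 ->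
  FR N f <= 2 * Rabs (int2 f) / L2norm f
            + 16 * PI ^ 2 * (C2norm f / L2norm f) * ln (INR N)
            + 8 * PI ^ 2 / L2norm f * (C2norm f / INR N).
Proof.
  intros P Hc Hne HN2 H; assert (HN1 : (1 <= N)%nat) by lia.
  assert (HN : 2 <= INR N) by (apply (le_INR 2) in HN2; simpl in HN2; lra).
  pose proof (L2norm_pos f N P Hc Hne H) as HL.
  pose proof (ghat_l2_ge N f HN1 P Hc HL H) as Hl2.
  pose proof (ghat_l1_le N f HN1 P Hc) as Hl1; pose proof (ghat_0_bound N f HN1 P Hc).
  pose proof (C2norm_nonneg f Hc); pose proof (ln_gt_half _ HN); pose proof PI_RGT_0.
  set (L := L2norm f) in *; set (C := C2norm f) in *; set (ell := ln (INR N)) in *.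
  set (A := INR N * Rabs (int2 f) + 2 * C + 8 * C * INR N / PI ^ 2 * (4 * (8 + 4 * ell))).
  assert (HNL : 0 < INR N * L / 2) by nra.
  assert (HFR : FR N f <= A / (INR N * L / 2)).
  { assert (0 <= ghat_l1 N f)
      by (apply sum_n_nonneg; intros; apply sum_n_nonneg; intros; apply Cmod_ge_0).
    unfold FR; apply Rle_trans with (A / ghat_l2 N f).
    - apply Rmult_le_compat_r; [apply Rlt_le, Rinv_0_lt_compat|unfold A]; lra.
    - apply Rmult_le_compat_l; [unfold A | apply Rinv_le_contravar]; lra. }
  eapply Rle_trans; [exact HFR|].
  replace (A / (INR N * L / 2))
    with (2 * Rabs (int2 f) / L + 4 * (C / (INR N * L)) + 16 * (C / L) * (32 + 16 * ell) / PI ^ 2)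
    by (unfold A; field; split; lra).
  replace (8 * PI ^ 2 / L * (C / INR N)) with (8 * PI ^ 2 * (C / (INR N * L))) by (field; split; lra).
  assert (HX : 0 <= C / L) by (apply Rmult_le_pos; [lra | apply Rlt_le, Rinv_0_lt_compat; lra]).
  assert (HY : 0 <= C / (INR N * L))
    by (apply Rmult_le_pos; [lra | apply Rlt_le, Rinv_0_lt_compat; nra]).
  pose proof PI2_3_2 as Hpi; assert (HP2 : 9 <= PI ^ 2) by nra.
  (* [32 + 16 ell <= 81 ell <= PI^4 ell] since [ell > 1/2]. *)
  assert (16 * (C / L) * (32 + 16 * ell) / PI ^ 2 <= 16 * PI ^ 2 * (C / L) * ell).
  { apply Rmult_le_reg_r with (PI ^ 2); [lra|].
    replace (16 * (C / L) * (32 + 16 * ell) / PI ^ 2 * PI ^ 2)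
      with (16 * (C / L) * (32 + 16 * ell)) by (field; lra).
    replace (16 * PI ^ 2 * (C / L) * ell * PI ^ 2) with (16 * (C / L) * (PI ^ 2 * PI ^ 2 * ell)) by ring.
    apply Rmult_le_compat_l; [lra|].
    assert (0 <= (PI ^ 2 * PI ^ 2 - 81) * ell) by (apply Rmult_le_pos; nra).
    nra. }
  nra.
Qed.

Lemma FR_le_mean N f : periodic1 f -> C2 f -> (exists x y, f x y <> 0) -> (2 <= N)%nat ->
  INR N * (L2norm f) ^ 2 >= 8 * (C2norm f) ^ 2 ->
  (forall x y, 0 <= f x y) -> 0 < int2 f ->
  FR N f <= 2 + 16 * PI ^ 2 * (C2norm f / int2 f) * ln (INR N)
            + 8 * PI ^ 2 / int2 f * (C2norm f / INR N).
Proof.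
  intros P Hc Hne HN2 H _ Hmu.
  pose proof (FR_le N f P Hc Hne HN2 H) as Hbound.
  pose proof (L2norm_pos f N P Hc Hne H) as HL.
  pose proof (int2_sqr_le f P Hc) as Hsq; rewrite <- L2norm_sqr in Hsq by auto.
  pose proof (C2norm_nonneg f Hc); pose proof PI_RGT_0.
  assert (HN : 2 <= INR N) by (apply (le_INR 2) in HN2; simpl in HN2; lra).
  pose proof (ln_gt_half _ HN).
  set (L := L2norm f) in *; set (C := C2norm f) in *; set (mu := int2 f) in *.
  assert (HmL : mu <= L) by nra.
  assert (Hinv : / L <= / mu) by (apply Rinv_le_contravar; auto).
  assert (T1 : 2 * Rabs mu / L <= 2).
  { rewrite Rabs_right by lra; apply Rmult_le_reg_r with L; auto.
    replace (2 * mu / L * L) with (2 * mu) by (field; lra); lra. }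
  assert (T2 : 16 * PI ^ 2 * (C / L) * ln (INR N) <= 16 * PI ^ 2 * (C / mu) * ln (INR N)).
  { apply Rmult_le_compat_r; [lra|]; apply Rmult_le_compat_l; [nra|].
    apply Rmult_le_compat_l; auto. }
  assert (T3 : 8 * PI ^ 2 / L * (C / INR N) <= 8 * PI ^ 2 / mu * (C / INR N)).
  { apply Rmult_le_compat_r; [apply Rmult_le_pos; [auto | apply Rlt_le, Rinv_0_lt_compat; lra]|].
    apply Rmult_le_compat_l; [nra | auto]. }
  lra.
Qed.

Theorem proposition1p6 (f : R -> R -> R) (N : nat) :
  periodic1 f ->
  C2 f ->
  (exists x y, f x y <> 0) ->
  (2 <= N)%nat ->
  INR N * (L2norm f) ^ 2 >= 8 * (C2norm f) ^ 2 ->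
  FR N f <= 2 * Rabs (int2 f) / L2norm f
            + 16 * PI ^ 2 * (C2norm f / L2norm f) * ln (INR N)
            + 8 * PI ^ 2 / L2norm f * (C2norm f / INR N)
  /\
  ((forall x y, 0 <= f x y) -> 0 < int2 f ->
   FR N f <= 2 + 16 * PI ^ 2 * (C2norm f / int2 f) * ln (INR N)
             + 8 * PI ^ 2 / int2 f * (C2norm f / INR N)).
Proof.
  intros P Hc Hne HN H; split.
  - exact (FR_le N f P Hc Hne HN H).
  - exact (FR_le_mean N f P Hc Hne HN H).
Qed.
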